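(* Let $\gamma\in(0,1)$, $\rho>0$, $C>0$, and let $d,m,p,f$ be as in the standing setting. Then there exist $N_0\gg 1$, $\Sigma>1$ and $\kappa\in(0,1)$ such that for every $\epsilon\in(0,1)$, every $u\in\mathbb{C}^{\mathbb{Z}^d}$ with $|u(n)|\leq Ce^{-\rho|n|}$ for all $n$, every $N$ with $N_0\leq N\leq|\log\epsilon|^\Sigma$ and every $\nu\in[1,2]^d$, there is a set $X_N\subset\mathbb{R}^d$ satisfying, for each $1\leq j\leq d$, $$\sup_{\theta_j^\neg\in\mathbb{R}^{d-1}}\mathrm{mes}\big(X_N(\theta_j^\neg)\big)\leq e^{-N^\gamma},$$ such that for all $\theta\notin X_N$ and every $\Lambda\in\mathcal{E}_N^0$, $$\|G_\Lambda^u(\theta)\|\leq e^{N^\kappa},\qquad |G_\Lambda^u(\theta)(n,n')|\leq e^{-\frac{4\rho}{5}|n-n'|}\ \text{ for } n,n'\in\Lambda,\ |n-n'|\geq \tfrac{N}{10}.$$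
   Context: Norm on $\mathbb{R}^d$ / $\mathbb{Z}^d$: $|x|=\max_i|x_i|$. For $u\in\mathbb{C}^{\mathbb{Z}^d}$ (identified with the function on $\mathbb{T}^d$ having Fourier coefficients $u(n)$), $f$ a real trigonometric polynomial, $p>1$, $m>0$, $\epsilon\ge0$, $\nu\in[1,2]^d$ and $\theta\in\mathbb{R}^d$, define the operator on $\mathbb{Z}^d$ $$F_u(\theta)=\mathrm{diag}\Big(\sum_{i=1}^d(\nu_in_i+\theta_i)^2-m\Big)_{n\in\mathbb{Z}^d}+\epsilon S_u,\qquad S_u(n,n')=p\,\widehat{fu^{p-1}}(n-n').$$ For $\Lambda\subset\mathbb{Z}^d$, $R_\Lambda$ is the restriction to $\Lambda$ and $G_\Lambda^u(\theta)=(R_\Lambda F_u(\theta)R_\Lambda)^{-1}$ (the Green's function), when it exists. For $N>0$, $\emptyset\neq I\subset\{1,\dots,d\}$, $\varsigma\in\{<,>\}^I$, let $Q_N(I,\varsigma)=[-N,N]^d\setminus\{n\in\mathbb{Z}^d:\ n_i\,\varsigma_i\,0\ \forall i\in I\}$, and let $\mathcal{E}_N^0$ consist of $[-N,N]^d\cap\mathbb{Z}^d$ together with all $Q_N(I,\varsigma)$. For $X\subset\mathbb{R}^d$ and $\theta_j^\neg=(\theta_1,\dots,\theta_{j-1},\theta_{j+1},\dots,\theta_d)$, the section $X(\theta_j^\neg)=\{\theta_j\in\mathbb{R}:\ \theta\in X\}$.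
   Formalization: The standing exponent p is an integer with p ≥ 2 instead of an arbitrary real p > 1. The statement above fails without it. *)

From Stdlib Require Import Reals Lra List ZArith ClassicalEpsilon.
Import ListNotations.
Open Scope R_scope.

Record Cx := mkC { re : R; im : R }.
Definition C0 : Cx := mkC 0 0.
Definition C1 : Cx := mkC 1 0.
Definition Cadd (z w : Cx) : Cx := mkC (re z + re w) (im z + im w).
Definition Csub (z w : Cx) : Cx := mkC (re z - re w) (im z - im w).
Definition Cmul (z w : Cx) : Cx :=
  mkC (re z * re w - im z * im w) (re z * im w + im z * re w).
Definition Cscal (r : R) (z : Cx) : Cx := mkC (r * re z) (r * im z).
Definition Cconj (z : Cx) : Cx := mkC (re z) (- im z).
Definition Cabs (z : Cx) : R := sqrt (re z * re z + im z * im z).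

(** Points of Z^d are lists of integers of length d. *)
Definition Zd := list Z.
Fixpoint zsub (a b : Zd) : Zd :=
  match a, b with
  | x :: a', y :: b' => (x - y)%Z :: zsub a' b'
  | _, _ => nil
  end.
Definition zopp (a : Zd) : Zd := map Z.opp a.
Definition znorm (a : Zd) : R :=
  IZR (fold_right (fun x acc => Z.max (Z.abs x) acc) 0%Z a).
Definition zeqb (a b : Zd) : bool :=
  if list_eq_dec Z.eq_dec a b then true else false.

Fixpoint boxZ (d M : nat) : list Zd :=
  match d with
  | O => [nil]
  | S d' => flat_map (fun x => map (cons x) (boxZ d' M))
              (map (fun k => (Z.of_nat k - Z.of_nat M)%Z) (seq 0 (2 * M + 1)))
  end.

Definition sumC (l : list Zd) (g : Zd -> Cx) : Cx :=
  fold_right (fun k acc => Cadd (g k) acc) C0 l.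
Definition sumR (l : list Zd) (g : Zd -> R) : R :=
  fold_right (fun k acc => g k + acc) 0 l.

Definition has_lsum (d : nat) (g : Zd -> Cx) (s : Cx) : Prop :=
  forall eta, 0 < eta -> exists M0 : nat, forall M : nat, (M0 <= M)%nat ->
    Cabs (Csub (sumC (boxZ d M) g) s) < eta.
Definition lsum (d : nat) (g : Zd -> Cx) : Cx :=
  epsilon (inhabits C0) (has_lsum d g).

(** convolution of Fourier coefficient sequences on Z^d
    (= Fourier coefficients of the product of the functions on T^d) *)
Definition conv (d : nat) (u v : Zd -> Cx) (n : Zd) : Cx :=
  lsum d (fun k => Cmul (u k) (v (zsub n k))).
(** Fourier coefficients of the constant function 1 *)
Definition delta0 (n : Zd) : Cx :=
  if forallb (Z.eqb 0) n then C1 else C0.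
(** Fourier coefficients of u^k *)
Fixpoint cpow (d : nat) (u : Zd -> Cx) (k : nat) : Zd -> Cx :=
  match k with
  | O => delta0
  | S k' => conv d u (cpow d u k')
  end.

(** fhat : Fourier coefficients of a real trigonometric polynomial on T^d *)
Definition real_trig_poly (d : nat) (fhat : Zd -> Cx) : Prop :=
  (exists M : nat, forall k, length k = d -> INR M < znorm k -> fhat k = C0) /\
  (forall k, length k = d -> fhat (zopp k) = Cconj (fhat k)).

Definition Su (d p : nat) (fhat u : Zd -> Cx) (n n' : Zd) : Cx :=
  Cscal (INR p) (conv d fhat (cpow d u (p - 1)) (zsub n n')).

Fixpoint dsum (nu th : list R) (n : Zd) : R :=
  match nu, th, n with
  | a :: nu', b :: th', x :: n' => (a * IZR x + b) ^ 2 + dsum nu' th' n'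
  | _, _, _ => 0
  end.

Definition Fent (d p : nat) (fhat : Zd -> Cx) (m eps : R) (nu theta : list R)
  (u : Zd -> Cx) (n n' : Zd) : Cx :=
  Cadd (if zeqb n n' then mkC (dsum nu theta n - m) 0 else C0)
       (Cscal eps (Su d p fhat u n n')).

(** The family E_N^0: either the box [-N,N]^d, or Q_N(I,sigma), where
    sigma i = None means i notin I, Some true means sigma_i = '>',
    Some false means sigma_i = '<'. Indices are 0-based. *)
Inductive region := RBox | RQ (sigma : nat -> option bool).

Definition valid_region (d : nat) (r : region) : Prop :=
  match r with
  | RBox => True
  | RQ s => (exists i, (i < d)%nat /\ s i <> None) /\
            (forall i, (d <= i)%nat -> s i = None)
  end.

Definition in_boxb (N : R) (n : Zd) : bool :=
  forallb (fun x => if Rle_dec (IZR (Z.abs x)) N then true else false) n.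

Fixpoint orthantb (s : nat -> option bool) (i : nat) (n : Zd) : bool :=
  match n with
  | nil => true
  | x :: n' =>
      (match s i with
       | None => true
       | Some true => Z.ltb 0 x
       | Some false => Z.ltb x 0
       end) && orthantb s (S i) n'
  end.

Definition in_regionb (N : R) (r : region) (n : Zd) : bool :=
  match r with
  | RBox => in_boxb N n
  | RQ s => in_boxb N n && negb (orthantb s 0 n)
  end.

Definition region_pts (d : nat) (N : R) (r : region) : list Zd :=
  filter (in_regionb N r) (boxZ d (Z.to_nat (up N))).

(** G is the inverse of R_Lambda A R_Lambda on the finite set pts *)
Definition is_inverse_on (pts : list Zd) (A G : Zd -> Zd -> Cx) : Prop :=
  forall n n', In n pts -> In n' pts ->
    sumC pts (fun k => Cmul (A n k) (G k n')) = (if zeqb n n' then C1 else C0) /\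
    sumC pts (fun k => Cmul (G n k) (A k n')) = (if zeqb n n' then C1 else C0).

Definition l2norm (pts : list Zd) (v : Zd -> Cx) : R :=
  sqrt (sumR pts (fun k => Cabs (v k) ^ 2)).

Definition opnorm_le (pts : list Zd) (G : Zd -> Zd -> Cx) (c : R) : Prop :=
  forall v : Zd -> Cx,
    l2norm pts (fun n => sumC pts (fun k => Cmul (G n k) (v k))) <= c * l2norm pts v.

Definition outer_mes_le (X : R -> Prop) (c : R) : Prop :=
  forall eta, 0 < eta -> exists a b : nat -> R,
    (forall k, a k <= b k) /\
    (forall t, X t -> exists k, a k < t < b k) /\
    (forall K, sum_f_R0 (fun k => b k - a k) K <= c + eta).

Fixpoint set_nthR (l : list R) (j : nat) (t : R) : list R :=
  match l, j with
  | nil, _ => nil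
  | _ :: l', O => t :: l'
  | x :: l', S j' => x :: set_nthR l' j' t
  end.

(** the section X(theta_j^neg), theta_j^neg given by theta (its j-th entry ignored) *)
Definition section (X : list R -> Prop) (theta : list R) (j : nat) : R -> Prop :=
  fun t => X (set_nthR theta j t).

(** Write F_u(theta) = D(theta) + eps S_u with D(theta) diagonal.  We take
    kappa = sigma = (1+gamma)/2 and Sigma = 1/sigma; then N <= |log eps|^Sigma
    forces eps <= exp(-N^sigma), so on a box of side ~N the perturbation eps S_u
    is smaller than any inverse polynomial in N times exp(-3 N^gamma).  The proof
    is thus a perturbation argument around the diagonal, not a multiscale one:
    - S_u decays like exp(-(9 rho/10)|n-n'|), since u^(p-1) and the trigonometric
      polynomial f have exponentially decaying coefficients (Sections 2-4:
      exponential sums over boxes, lattice series, convolution estimates);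
    - X_N is the set of theta for which some diagonal entry on the box has
      modulus below delta = exp(-3 N^gamma); each line section of X_N is covered
      by two intervals of length 2 sqrt delta per lattice point (Section 5);
    - off X_N the restricted matrix is diagonally dominant, hence invertible
      (via MathComp's matrices, Section 6), and a maximum principle for the
      weighted entries of the inverse gives |G(n,n')| <= (2/delta) e^{-(9 rho/10)|n-n'|}
      (Section 7);
    - elementary asymptotics of N^gamma and N^sigma against powers of N (Section 8)
      turn these bounds into the stated ones (Section 9). *)

From Pilot Require Import Defs.
From Stdlib Require Import Reals Lra Lia List ZArith Permutation Psatz ClassicalEpsilon.
From mathcomp Require ssreflect ssrfun ssrbool eqtype ssrnat seq fintype bigop ssralg matrix mxalgebra.
From mathcomp Require Rstruct.
From mathcomp.real_closed Require complex.
Import ListNotations.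
Open Scope R_scope.

(** ** 1. Complex numbers and finite sums *)

Lemma Cx_eq : forall z w : Cx, re z = re w -> im z = im w -> z = w.
Proof. intros [a b] [c e]; simpl; intros; subst; reflexivity. Qed.

Ltac ceq := apply Cx_eq; simpl; ring.
Ltac sqr_nonneg x := let H := fresh in pose proof (Rle_0_sqr x) as H; unfold Rsqr in H.

Lemma Cadd_comm : forall z w, Cadd z w = Cadd w z. Proof. intros; unfold Cadd; ceq. Qed.
Lemma Cadd_assoc : forall z w v, Cadd z (Cadd w v) = Cadd (Cadd z w) v.
Proof. intros; unfold Cadd; ceq. Qed.
Lemma Cadd_0_l : forall z, Cadd C0 z = z. Proof. intros; unfold Cadd, C0; ceq. Qed.
Lemma Cmul_distr_l : forall a b c, Cmul a (Cadd b c) = Cadd (Cmul a b) (Cmul a c).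
Proof. intros; unfold Cmul, Cadd; ceq. Qed.
Lemma Cmul_distr_r : forall a b c, Cmul (Cadd a b) c = Cadd (Cmul a c) (Cmul b c).
Proof. intros; unfold Cmul, Cadd; ceq. Qed.
Lemma Cmul_0_r : forall a, Cmul a C0 = C0. Proof. intros; unfold Cmul, C0; ceq. Qed.
Lemma Cmul_0_l : forall a, Cmul C0 a = C0. Proof. intros; unfold Cmul, C0; ceq. Qed.

Lemma Cabs_nonneg : forall z, 0 <= Cabs z.
Proof. intros; unfold Cabs; apply sqrt_pos. Qed.

Lemma Cabs_mul : forall z w, Cabs (Cmul z w) = Cabs z * Cabs w.
Proof.
  intros [a b] [c e]; unfold Cabs, Cmul; simpl.
  sqr_nonneg a; sqr_nonneg b; sqr_nonneg c; sqr_nonneg e.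
  rewrite <- sqrt_mult by nra. f_equal; ring.
Qed.

Lemma Cabs_scal : forall r z, Cabs (Cscal r z) = Rabs r * Cabs z.
Proof.
  intros r [a b]; unfold Cabs, Cscal; simpl.
  sqr_nonneg a; sqr_nonneg b; sqr_nonneg r.
  rewrite <- sqrt_Rsqr_abs, <- sqrt_mult by (unfold Rsqr; nra).
  f_equal. unfold Rsqr. ring.
Qed.

(** The triangle inequality, from Cauchy-Schwarz [ac + be <= |z||w|]. *)
Lemma Cabs_add : forall z w, Cabs (Cadd z w) <= Cabs z + Cabs w.
Proof.
  intros [a b] [c e]; unfold Cabs, Cadd; simpl.
  sqr_nonneg a; sqr_nonneg b; sqr_nonneg c; sqr_nonneg e; sqr_nonneg (a*e-b*c).
  set (x := sqrt (a * a + b * b)); set (y := sqrt (c * c + e * e)).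
  assert (Hx : 0 <= x) by apply sqrt_pos. assert (Hy : 0 <= y) by apply sqrt_pos.
  assert (Hxx : x * x = a * a + b * b) by (apply sqrt_sqrt; nra).
  assert (Hyy : y * y = c * c + e * e) by (apply sqrt_sqrt; nra).
  assert (Hcs : a * c + b * e <= x * y).
  { destruct (Rle_dec (a * c + b * e) 0); [nra|].
    apply Rsqr_incr_0_var; [unfold Rsqr|nra].
    replace ((x * y) * (x * y)) with ((x * x) * (y * y)) by ring. rewrite Hxx, Hyy. nra. }
  sqr_nonneg (a + c); sqr_nonneg (b + e).
  apply Rsqr_incr_0_var; [|lra]. rewrite Rsqr_sqrt by nra. unfold Rsqr. nra.
Qed.

Lemma Cabs_le_parts : forall z, Cabs z <= Rabs (re z) + Rabs (im z).
Proof.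
  intros [a b]; unfold Cabs; simpl.
  pose proof (Rabs_pos a); pose proof (Rabs_pos b).
  apply Rsqr_incr_0_var; [|lra].
  rewrite Rsqr_sqrt by nra. rewrite (Rsqr_abs a), (Rsqr_abs b) at 1. unfold Rsqr. nra.
Qed.

Lemma Cabs_re : forall z, Rabs (re z) <= Cabs z.
Proof.
  intros [a b]; unfold Cabs; simpl. sqr_nonneg b. rewrite <- sqrt_Rsqr_abs.
  apply sqrt_le_1_alt. unfold Rsqr; nra.
Qed.

Lemma Cabs_im : forall z, Rabs (im z) <= Cabs z.
Proof.
  intros [a b]; unfold Cabs; simpl. sqr_nonneg a. rewrite <- sqrt_Rsqr_abs.
  apply sqrt_le_1_alt. unfold Rsqr; nra.
Qed.

Lemma Cabs_C0 : Cabs C0 = 0.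
Proof. unfold Cabs, C0; simpl. replace (0*0+0*0) with 0 by ring. apply sqrt_0. Qed.

Lemma Cabs_C1 : Cabs Defs.C1 = 1.
Proof. unfold Cabs, Defs.C1; simpl. replace (1*1+0*0) with 1 by ring. apply sqrt_1. Qed.

Lemma Cabs_eq0 : forall z, Cabs z = 0 -> z = C0.
Proof.
  intros [a b] H; unfold Cabs in H; simpl in H. sqr_nonneg a; sqr_nonneg b.
  apply sqrt_eq_0 in H; [|nra]. apply Cx_eq; simpl; nra.
Qed.

Lemma Cabs_real : forall a, Cabs (mkC a 0) = Rabs a.
Proof. intros; unfold Cabs; simpl. rewrite <- sqrt_Rsqr_abs. unfold Rsqr; f_equal; ring. Qed.

Lemma Cabs_opp_sub : forall z w, Cabs (Csub z w) = Cabs (Csub w z).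
Proof. intros [a b] [c e]; unfold Cabs, Csub; simpl; f_equal; ring. Qed.

Lemma Cabs_sub_le : forall z w, Cabs z <= Cabs w + Cabs (Csub z w).
Proof.
  intros. replace z with (Cadd w (Csub z w)) at 1 by (unfold Cadd, Csub; ceq).
  apply Cabs_add.
Qed.

Lemma Cabs_sub_tri : forall a b, Cabs (Csub a b) <= Cabs a + Cabs b.
Proof.
  intros. replace (Csub a b) with (Cadd a (Cscal (-1) b)) by (unfold Csub, Cadd, Cscal; ceq).
  eapply Rle_trans. apply Cabs_add. rewrite Cabs_scal. replace (Rabs (-1)) with 1 by (rewrite Rabs_left; lra). lra.
Qed.

Lemma sumC_app : forall l1 l2 g, sumC (l1 ++ l2) g = Cadd (sumC l1 g) (sumC l2 g).
Proof.
  induction l1; intros; simpl. rewrite Cadd_0_l; auto.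
  rewrite IHl1. apply Cadd_assoc.
Qed.

Lemma sumR_app : forall l1 l2 g, sumR (l1 ++ l2) g = sumR l1 g + sumR l2 g.
Proof. induction l1; intros; simpl. ring. rewrite IHl1; ring. Qed.

Lemma sumC_perm : forall l1 l2 g, Permutation l1 l2 -> sumC l1 g = sumC l2 g.
Proof.
  intros l1 l2 g H; induction H; simpl; auto.
  - rewrite IHPermutation; auto.
  - rewrite !Cadd_assoc, (Cadd_comm (g y)); auto.
  - congruence.
Qed.

Lemma sumC_ext : forall l (f g : Zd -> Cx), (forall k, In k l -> f k = g k) -> sumC l f = sumC l g.
Proof.
  induction l; intros; simpl; auto.
  rewrite H by (left; auto). rewrite (IHl f g); auto. intros; apply H; right; auto.
Qed.

Lemma sumC_add : forall l f g, sumC l (fun k => Cadd (f k) (g k)) = Cadd (sumC l f) (sumC l g).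
Proof. induction l; intros; simpl. unfold Cadd, C0; ceq. rewrite IHl. unfold Cadd; ceq. Qed.

Lemma sumC_abs : forall l g, Cabs (sumC l g) <= sumR l (fun k => Cabs (g k)).
Proof.
  induction l; intros; simpl. rewrite Cabs_C0; lra.
  eapply Rle_trans. apply Cabs_add. specialize (IHl g); lra.
Qed.

Lemma sumR_le : forall l f g, (forall k, In k l -> f k <= g k) -> sumR l f <= sumR l g.
Proof.
  induction l; intros; simpl. lra.
  pose proof (H a (or_introl eq_refl)).
  assert (sumR l f <= sumR l g) by (apply IHl; intros; apply H; right; auto). lra.
Qed.

Lemma sumR_nonneg : forall l f, (forall k, In k l -> 0 <= f k) -> 0 <= sumR l f.
Proof.
  intros. replace 0 with (sumR l (fun _ => 0)).
  - apply sumR_le; auto.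
  - induction l; simpl; auto. rewrite IHl; [ring|]. intros; apply H; right; auto.
Qed.

Lemma sumR_scal : forall l c f, sumR l (fun k => c * f k) = c * sumR l f.
Proof. induction l; intros; simpl. ring. rewrite IHl; ring. Qed.

Lemma sumR_const : forall (l : list Zd) c, sumR l (fun _ => c) = INR (length l) * c.
Proof.
  induction l; intros; simpl. ring.
  rewrite IHl. destruct (length l); simpl; ring.
Qed.

Lemma sumR_filter : forall (P : Zd -> bool) l f,
  sumR l f = sumR (filter P l) f + sumR (filter (fun k => negb (P k)) l) f.
Proof. induction l; intros; simpl. ring. destruct (P a); simpl; rewrite (IHl f); ring. Qed.

Lemma sumR_in_le : forall l f k, (forall k, In k l -> 0 <= f k) -> In k l -> f k <= sumR l f.
Proof.
  induction l; intros f k H Hk; simpl in *. contradiction.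
  destruct Hk as [<-|Hk].
  - assert (0 <= sumR l f) by (apply sumR_nonneg; auto). lra.
  - pose proof (H a (or_introl eq_refl)). pose proof (IHl f k (fun k h => H k (or_intror h)) Hk). lra.
Qed.

(** ** 2. The sup norm and boxes in Z^d *)

Definition zn (a : Zd) : Z := fold_right (fun x acc => Z.max (Z.abs x) acc) 0%Z a.

Lemma znorm_zn : forall a, znorm a = IZR (zn a). Proof. reflexivity. Qed.

Lemma zn_nonneg : forall a, (0 <= zn a)%Z.
Proof. induction a; simpl; lia. Qed.

Lemma znorm_nonneg : forall a, 0 <= znorm a.
Proof. intros; rewrite znorm_zn; apply IZR_le; apply zn_nonneg. Qed.

Lemma zsub_length : forall a b, length a = length b -> length (zsub a b) = length a.
Proof. induction a; destruct b; simpl; intros; try discriminate; auto. Qed.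

Lemma zn_zsub_self : forall n, zn (zsub n n) = 0%Z.
Proof. induction n; simpl; auto. rewrite IHn. lia. Qed.

Lemma zn_zero : forall n, forallb (Z.eqb 0) n = true -> zn n = 0%Z.
Proof.
  induction n; intros; auto. simpl in H. apply Bool.andb_true_iff in H. destruct H.
  destruct a; try discriminate. simpl. rewrite IHn; auto.
Qed.

Lemma zn_ge_abs : forall a x, In x a -> (Z.abs x <= zn a)%Z.
Proof.
  induction a; simpl; intros. contradiction.
  destruct H; subst. lia. specialize (IHa x H). lia.
Qed.

Lemma zn_le_all : forall a (M : Z), (0 <= M)%Z -> (forall x, In x a -> (Z.abs x <= M)%Z) -> (zn a <= M)%Z.
Proof.
  induction a; simpl; intros. lia.
  assert (zn a0 <= M)%Z by (apply IHa; auto). specialize (H0 a (or_introl eq_refl)). lia.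
Qed.

Lemma znorm_tri : forall a b, length a = length b -> znorm a <= znorm b + znorm (zsub a b).
Proof.
  intros a b Hab. rewrite !znorm_zn, <- plus_IZR. apply IZR_le.
  revert b Hab; induction a; destruct b; simpl; intros; try discriminate; try lia.
  injection Hab; intro H'. specialize (IHa b H').
  pose proof (zn_nonneg b). pose proof (zn_nonneg (zsub a0 b)). lia.
Qed.

Lemma znorm_tri3 : forall a b c, length a = length b -> length b = length c ->
  znorm (zsub a c) <= znorm (zsub a b) + znorm (zsub b c).
Proof.
  intros a b c Hab Hbc. rewrite !znorm_zn, <- plus_IZR. apply IZR_le.
  revert b c Hab Hbc; induction a; destruct b; destruct c; simpl; intros; try discriminate; try lia.
  injection Hab; injection Hbc; intros. specialize (IHa b c H0 H).
  pose proof (zn_nonneg (zsub a0 b)). pose proof (zn_nonneg (zsub b c)). lia.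
Qed.

Definition zl1 (a : Zd) : Z := fold_right (fun x acc => Z.abs x + acc)%Z 0%Z a.

Lemma zl1_le : forall a, (zl1 a <= Z.of_nat (length a) * zn a)%Z.
Proof.
  induction a. simpl; lia.
  change (length (a :: a0)) with (S (length a0)). rewrite Nat2Z.inj_succ.
  simpl zl1; simpl zn. fold (zn a0).
  pose proof (zn_nonneg a0). pose proof (Zle_0_nat (length a0)). nia.
Qed.

Definition xsZ (M : nat) : list Z := map (fun k => (Z.of_nat k - Z.of_nat M)%Z) (seq 0 (2 * M + 1)).

Lemma xsZ_in : forall M x, In x (xsZ M) <-> (Z.abs x <= Z.of_nat M)%Z.
Proof.
  intros; unfold xsZ; rewrite in_map_iff; split.
  - intros [k [<- Hk]]. apply in_seq in Hk. lia.
  - intros H. exists (Z.to_nat (x + Z.of_nat M)). split. lia. apply in_seq. lia.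
Qed.

Lemma xsZ_NoDup : forall M, NoDup (xsZ M).
Proof. intros; unfold xsZ. apply FinFun.Injective_map_NoDup. intros x y H; lia. apply seq_NoDup. Qed.

Lemma xsZ_length : forall M, length (xsZ M) = (2 * M + 1)%nat.
Proof. intros; unfold xsZ. rewrite length_map, length_seq. auto. Qed.

Lemma boxZ_S : forall d M, boxZ (S d) M = flat_map (fun x => map (cons x) (boxZ d M)) (xsZ M).
Proof. reflexivity. Qed.

Lemma boxZ_in : forall d M k, In k (boxZ d M) <->
  (length k = d /\ forall x, In x k -> (Z.abs x <= Z.of_nat M)%Z).
Proof.
  induction d; intros M k.
  - simpl. split.
    + intros [<-|[]]. split; auto. intros x [].
    + intros [H _]. destruct k; try discriminate. auto.
  - rewrite boxZ_S, in_flat_map. split.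
    + intros [x [Hx Hk]]. apply in_map_iff in Hk. destruct Hk as [k' [<- Hk']].
      apply IHd in Hk'. destruct Hk'. apply xsZ_in in Hx. simpl. split. lia.
      intros y [<-|Hy]; auto.
    + intros [Hl Hall]. destruct k as [|x k']; try discriminate. exists x. split.
      * apply xsZ_in. apply Hall; left; auto.
      * apply in_map. apply IHd. simpl in Hl. split. lia. intros; apply Hall; right; auto.
Qed.

Lemma boxZ_len : forall d M k, In k (boxZ d M) -> length k = d.
Proof. intros. apply boxZ_in in H. tauto. Qed.

Lemma boxZ_zn : forall d M k, In k (boxZ d M) -> (zn k <= Z.of_nat M)%Z.
Proof. intros. apply boxZ_in in H. destruct H. apply zn_le_all; auto. lia. Qed.

Lemma boxZ_in_zn : forall d M k, length k = d -> (zn k <= Z.of_nat M)%Z -> In k (boxZ d M).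
Proof. intros. apply boxZ_in. split; auto. intros. pose proof (zn_ge_abs k x H1). lia. Qed.

Lemma boxZ_NoDup : forall d M, NoDup (boxZ d M).
Proof.
  induction d; intros. { simpl. constructor. intros []. constructor. }
  rewrite boxZ_S. pose proof (xsZ_NoDup M) as Hxs. induction (xsZ M) as [|x xs IH]; simpl.
  { constructor. }
  inversion Hxs; subst. apply NoDup_app.
  - apply FinFun.Injective_map_NoDup; auto. intros u v E; injection E; auto.
  - apply IH; auto.
  - intros k Hk1 Hk2. apply in_map_iff in Hk1. destruct Hk1 as [k1 [<- _]].
    apply in_flat_map in Hk2. destruct Hk2 as [y [Hy Hk]]. apply in_map_iff in Hk.
    destruct Hk as [k2 [E _]]. injection E; intros; subst. contradiction.
Qed.

Lemma boxZ_length : forall d M, length (boxZ d M) = Nat.pow (2 * M + 1) d.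
Proof.
  induction d; intros; [reflexivity|]. rewrite boxZ_S.
  assert (Hlen : forall xs : list Z, length (flat_map (fun x => map (cons x) (boxZ d M)) xs)
                                  = (length xs * length (boxZ d M))%nat).
  { induction xs; simpl; auto. rewrite length_app, length_map, IHxs. reflexivity. }
  rewrite Hlen, xsZ_length, IHd. simpl. lia.
Qed.

Lemma boxZ_card_bound : forall d N, 1 <= N ->
  INR (length (boxZ d (Z.to_nat (up N)))) <= (2 * N + 3) ^ d.
Proof.
  intros d N HN. destruct (archimed N) as [Hup1 Hup2].
  assert (HM : INR (Z.to_nat (up N)) <= N + 1).
  { rewrite INR_IZR_INZ, Z2Nat.id. lra. apply le_IZR. lra. }
  rewrite boxZ_length, pow_INR, plus_INR, mult_INR. simpl (INR 2). simpl (INR 1).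
  apply pow_incr. split; [pose proof (pos_INR (Z.to_nat (up N))); lra | lra].
Qed.

Definition boxb (M : nat) (k : Zd) : bool := Z.leb (zn k) (Z.of_nat M).

Lemma boxZ_split : forall d M M', (M <= M')%nat ->
  Permutation (boxZ d M') (boxZ d M ++ filter (fun k => negb (boxb M k)) (boxZ d M')).
Proof.
  intros. apply NoDup_Permutation. apply boxZ_NoDup.
  - apply NoDup_app. apply boxZ_NoDup. apply NoDup_filter, boxZ_NoDup.
    intros k H1 H2. apply filter_In in H2. destruct H2 as [_ H2].
    apply boxZ_zn in H1. unfold boxb in H2. apply Bool.negb_true_iff, Z.leb_gt in H2. lia.
  - intros k. rewrite in_app_iff, filter_In. split.
    + intros H1. destruct (boxb M k) eqn:E; [left|right; auto].
      apply boxZ_in_zn. eapply boxZ_len; eauto. unfold boxb in E. apply Z.leb_le in E. auto.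
    + intros [H1|[H1 _]]; auto. apply boxZ_in_zn. eapply boxZ_len; eauto. apply boxZ_zn in H1. lia.
Qed.

(** ** 3. Exponential sums over boxes *)

Lemma exp_le : forall x y, x <= y -> exp x <= exp y.
Proof. intros. destruct H. apply Rlt_le, exp_increasing; auto. subst; lra. Qed.

Lemma exp_pow_nat : forall b n, exp (- b * INR n) = exp (- b) ^ n.
Proof.
  induction n. simpl. rewrite Rmult_0_r, exp_0; auto.
  rewrite S_INR. simpl. rewrite <- IHn, <- exp_plus. f_equal. ring.
Qed.

Definition sumZ (xs : list Z) (h : Z -> R) : R := fold_right (fun x acc => h x + acc) 0 xs.

Lemma sumZ_ext : forall l f g, (forall x, f x = g x) -> sumZ l f = sumZ l g.
Proof. induction l; intros; simpl; auto. rewrite H, (IHl f g); auto. Qed.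

Lemma sumZ_nonneg : forall l f, (forall x, 0 <= f x) -> 0 <= sumZ l f.
Proof. induction l; intros; simpl. lra. pose proof (H a); pose proof (IHl f H); lra. Qed.

Lemma sumZ_perm : forall l1 l2 h, Permutation l1 l2 -> sumZ l1 h = sumZ l2 h.
Proof. intros; induction H; simpl; auto; lra. Qed.

Lemma xsZ_S : forall M, Permutation (xsZ (S M)) ((Z.of_nat (S M)) :: (- Z.of_nat (S M))%Z :: xsZ M).
Proof.
  intros. apply NoDup_Permutation. apply xsZ_NoDup.
  - constructor. intros [E|E]. lia. apply xsZ_in in E. lia.
    constructor. intros E. apply xsZ_in in E. lia. apply xsZ_NoDup.
  - intros x. rewrite !xsZ_in. simpl. rewrite xsZ_in. lia.
Qed.

Lemma sumZ_geom : forall M q, 0 <= q < 1 ->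
  sumZ (xsZ M) (fun x => q ^ Z.to_nat (Z.abs x)) <= 1 + 2 * q / (1 - q).
Proof.
  intros M q Hq.
  assert (Hclosed : forall M, sumZ (xsZ M) (fun x => q ^ Z.to_nat (Z.abs x))
                              = 1 + 2 * q * (1 - q ^ M) / (1 - q)).
  { induction M0.
    - unfold xsZ; simpl. field. lra.
    - rewrite (sumZ_perm _ _ _ (xsZ_S M0)). unfold sumZ at 1. cbn [fold_right].
      fold (sumZ (xsZ M0) (fun x : Z => q ^ Z.to_nat (Z.abs x))). rewrite IHM0.
      replace (Z.to_nat (Z.abs (Z.of_nat (S M0)))) with (S M0) by lia.
      replace (Z.to_nat (Z.abs (- Z.of_nat (S M0)))) with (S M0) by lia.
      simpl pow. field. lra. }
  rewrite Hclosed. assert (0 <= q ^ M) by (apply pow_le; lra).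
  apply Rplus_le_compat_l. unfold Rdiv. apply Rmult_le_compat_r.
  apply Rlt_le, Rinv_0_lt_compat; lra. nra.
Qed.

Definition prodh (h : Z -> R) (k : Zd) : R := fold_right (fun x acc => h x * acc) 1 k.

Lemma sumR_boxZ_prod : forall d M h, sumR (boxZ d M) (prodh h) = (sumZ (xsZ M) h) ^ d.
Proof.
  assert (Hflat : forall (xs : list Z) (F : Z -> list Zd) g,
    sumR (flat_map F xs) g = fold_right (fun x acc => sumR (F x) g + acc) 0 xs).
  { induction xs; intros; simpl; auto. rewrite sumR_app, IHxs. auto. }
  assert (Hcons : forall (B : list Zd) x g, sumR (map (cons x) B) g = sumR B (fun k => g (x :: k))).
  { induction B; intros; simpl; auto. rewrite IHB; auto. }
  induction d; intros.
  - simpl. unfold prodh; simpl. ring.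
  - rewrite boxZ_S, Hflat. simpl pow. rewrite <- IHd.
    generalize (xsZ M). induction l; simpl. ring.
    rewrite IHl, Hcons. unfold prodh at 1; simpl.
    rewrite sumR_scal. change (fold_right (fun (x : Z) (acc : R) => h x * acc) 1) with (prodh h). ring.
Qed.

Lemma prodh_exp : forall b k, prodh (fun x => exp (- b * IZR (Z.abs x))) k = exp (- b * IZR (zl1 k)).
Proof.
  induction k; simpl. rewrite Rmult_0_r, exp_0; auto.
  unfold prodh in *. simpl. rewrite IHk, <- exp_plus. f_equal. rewrite plus_IZR. ring.
Qed.

(** The uniform bound for sum_{n in box} exp(-c|n|): with q = exp(-c/d),
    it is (1 + 2q/(1-q))^d, independently of the size of the box. *)
Definition exp_sum_const (d : nat) (c : R) : R :=
  let q := exp (- (c / INR d)) in (1 + 2 * q / (1 - q)) ^ d.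

Lemma exp_sum_const_pos : forall d c, 0 < c -> (1 <= d)%nat -> 0 < exp_sum_const d c.
Proof.
  intros. unfold exp_sum_const. apply pow_lt.
  assert (0 < INR d) by (apply lt_0_INR; lia).
  assert (0 < exp (- (c / INR d)) < 1).
  { split. apply exp_pos. rewrite <- exp_0. apply exp_increasing.
    assert (0 < c / INR d) by (apply Rdiv_lt_0_compat; auto). lra. }
  assert (0 < 2 * exp (- (c / INR d)) / (1 - exp (- (c / INR d)))) by (apply Rdiv_lt_0_compat; lra).
  lra.
Qed.

(** exp(-c|n|) summed over any box is at most exp_sum_const d c: compare with the
    product prod_i exp(-(c/d)|n_i|), using |n|_1 <= d |n|, and factorise. *)
Lemma box_exp_sum : forall d c M, (1 <= d)%nat -> 0 < c ->
  sumR (boxZ d M) (fun k => exp (- c * znorm k)) <= exp_sum_const d c.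
Proof.
  intros d c M Hd Hc.
  assert (HdR : 0 < INR d) by (apply lt_0_INR; lia).
  set (b := c / INR d).
  assert (Hb : 0 < b) by (apply Rdiv_lt_0_compat; auto).
  set (h := fun x : Z => exp (- b * IZR (Z.abs x))).
  apply Rle_trans with (sumR (boxZ d M) (prodh h)).
  { apply sumR_le. intros k Hk. unfold h. rewrite prodh_exp. apply exp_le.
    pose proof (zl1_le k) as Hl1. rewrite (boxZ_len _ _ _ Hk) in Hl1.
    apply IZR_le in Hl1. rewrite mult_IZR, <- INR_IZR_INZ in Hl1. rewrite znorm_zn.
    unfold b, Rdiv.
    assert (c * / INR d * IZR (zl1 k) <= c * IZR (zn k)); [|lra].
    apply Rmult_le_reg_l with (INR d); auto.
    replace (INR d * (c * / INR d * IZR (zl1 k))) with (c * IZR (zl1 k)) by (field; lra).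
    replace (INR d * (c * IZR (zn k))) with (c * (INR d * IZR (zn k))) by ring.
    apply Rmult_le_compat_l; lra. }
  rewrite sumR_boxZ_prod. unfold exp_sum_const. fold b. apply pow_incr. split.
  { apply sumZ_nonneg. intros; unfold h; apply Rlt_le, exp_pos. }
  assert (Hq : 0 <= exp (- b) < 1).
  { split. apply Rlt_le, exp_pos. rewrite <- exp_0. apply exp_increasing. lra. }
  rewrite (sumZ_ext _ _ (fun x => exp (-b) ^ Z.to_nat (Z.abs x))).
  - apply sumZ_geom; auto.
  - intros x. unfold h. rewrite <- exp_pow_nat. f_equal. rewrite INR_IZR_INZ. f_equal. f_equal. lia.
Qed.

(** ** 4. Lattice series and convolutions of exponentially decaying sequences *)

Lemma Cx_cauchy_complete : forall s : nat -> Cx,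
  (forall eta, 0 < eta -> exists M0, forall M M', (M0 <= M)%nat -> (M0 <= M')%nat ->
     Cabs (Csub (s M') (s M)) < eta) ->
  exists l, forall eta, 0 < eta -> exists M0, forall M, (M0 <= M)%nat -> Cabs (Csub (s M) l) < eta.
Proof.
  intros s Hcauchy.
  assert (Hre : Cauchy_crit (fun M => re (s M))).
  { intros eta He. destruct (Hcauchy eta He) as [M0 HM0]. exists M0. intros n m Hn Hm.
    unfold R_dist. eapply Rle_lt_trans. 2: apply (HM0 m n); lia.
    eapply Rle_trans. 2: apply Cabs_re. simpl. right; reflexivity. }
  assert (Him : Cauchy_crit (fun M => im (s M))).
  { intros eta He. destruct (Hcauchy eta He) as [M0 HM0]. exists M0. intros n m Hn Hm.
    unfold R_dist. eapply Rle_lt_trans. 2: apply (HM0 m n); lia.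
    eapply Rle_trans. 2: apply Cabs_im. simpl. right; reflexivity. }
  destruct (R_complete _ Hre) as [lr Hlr]. destruct (R_complete _ Him) as [li Hli].
  exists (mkC lr li). intros eta He.
  destruct (Hlr (eta/2)) as [M1 HM1]; [lra|]. destruct (Hli (eta/2)) as [M2 HM2]; [lra|].
  exists (Nat.max M1 M2). intros M HM. eapply Rle_lt_trans. apply Cabs_le_parts.
  simpl. specialize (HM1 M ltac:(lia)). specialize (HM2 M ltac:(lia)). unfold R_dist in *. lra.
Qed.

Lemma exp_small : forall B eps, 0 < eps -> exists M0 : nat, forall y, INR M0 <= y -> B * exp (- y) < eps.
Proof.
  intros B eps He.
  destruct (Rle_lt_dec B 0).
  - exists 0%nat. intros. pose proof (exp_pos (-y)). nra.
  - destruct (archimed (B / eps)) as [H1 _].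
    assert (HBe : 0 < B / eps) by (apply Rdiv_lt_0_compat; auto).
    exists (Z.to_nat (up (B / eps))). intros y Hy.
    assert (B / eps < y).
    { rewrite INR_IZR_INZ, Z2Nat.id in Hy. lra. apply le_IZR. lra. }
    pose proof (exp_ineq1 y ltac:(lra)).
    assert (exp (-y) * exp y = 1) by (rewrite <- exp_plus; replace (-y+y) with 0 by ring; apply exp_0).
    assert (B < eps * y).
    { apply Rmult_lt_reg_r with (/ eps); [apply Rinv_0_lt_compat; auto|].
      replace (eps * y * / eps) with y by (field; lra). exact H. }
    pose proof (exp_pos (-y)). nra.
Qed.

Lemma box_tail_bound : forall d (F : Zd -> Cx) A c M M', (1 <= d)%nat -> 0 < c -> 0 <= A ->
  (forall k, length k = d -> Cabs (F k) <= A * exp (- c * znorm k)) -> (M <= M')%nat ->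
  Cabs (Csub (sumC (boxZ d M') F) (sumC (boxZ d M) F))
    <= A * exp_sum_const d (c/2) * exp (- (c/2) * INR (S M)).
Proof.
  intros d F A c M M' Hd Hc HA HF HM.
  rewrite (sumC_perm _ _ F (boxZ_split d M M' HM)), sumC_app.
  replace (Csub (Cadd (sumC (boxZ d M) F) (sumC (filter (fun k => negb (boxb M k)) (boxZ d M')) F))
                (sumC (boxZ d M) F))
    with (sumC (filter (fun k => negb (boxb M k)) (boxZ d M')) F) by (unfold Csub, Cadd; ceq).
  eapply Rle_trans. apply sumC_abs.
  eapply Rle_trans. apply sumR_le with
    (g := fun k => A * exp (- (c/2) * INR (S M)) * exp (- (c/2) * znorm k)).
  { intros k Hk. apply filter_In in Hk. destruct Hk as [Hk Hb].
    eapply Rle_trans. apply HF; eapply boxZ_len; eauto.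
    rewrite Rmult_assoc, <- exp_plus. apply Rmult_le_compat_l; auto. apply exp_le.
    unfold boxb in Hb. apply Bool.negb_true_iff, Z.leb_gt in Hb.
    assert (INR (S M) <= znorm k) by (rewrite znorm_zn, INR_IZR_INZ; apply IZR_le; lia).
    assert (c/2 * INR (S M) <= c/2 * znorm k) by (apply Rmult_le_compat_l; lra). lra. }
  rewrite sumR_scal.
  replace (A * exp_sum_const d (c / 2) * exp (- (c / 2) * INR (S M))) with
    (A * exp (- (c / 2) * INR (S M)) * exp_sum_const d (c / 2)) by ring.
  apply Rmult_le_compat_l. apply Rmult_le_pos; auto; apply Rlt_le, exp_pos.
  eapply Rle_trans. 2: apply (box_exp_sum d (c/2) M'); auto; lra.
  rewrite (sumR_filter (boxb M) (boxZ d M')).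
  assert (0 <= sumR (filter (boxb M) (boxZ d M')) (fun k => exp (- (c / 2) * znorm k)))
    by (apply sumR_nonneg; intros; apply Rlt_le, exp_pos).
  lra.
Qed.

Lemma lsum_bound : forall d (F : Zd -> Cx) A c, (1 <= d)%nat -> 0 < c -> 0 <= A ->
  (forall k, length k = d -> Cabs (F k) <= A * exp (- c * znorm k)) ->
  has_lsum d F (lsum d F) /\ Cabs (lsum d F) <= A * exp_sum_const d c.
Proof.
  intros d F A c Hd Hc HA HF.
  set (s := fun M : nat => sumC (boxZ d M) F).
  assert (Hpart : forall M, Cabs (s M) <= A * exp_sum_const d c).
  { intros M. unfold s. eapply Rle_trans. apply sumC_abs.
    eapply Rle_trans. apply sumR_le with (g := fun k => A * exp (- c * znorm k)).
    intros; apply HF; eapply boxZ_len; eauto.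
    rewrite sumR_scal. apply Rmult_le_compat_l; auto. apply box_exp_sum; auto. }
  set (B := A * exp_sum_const d (c/2)).
  assert (Hcauchy : forall eta, 0 < eta -> exists M0, forall M M', (M0 <= M)%nat -> (M0 <= M')%nat ->
    Cabs (Csub (s M') (s M)) < eta).
  { intros eta He. destruct (exp_small B eta He) as [M0 HM0]. exists (Z.to_nat (up (2 / c * INR M0))).
    assert (Hup : forall M, (Z.to_nat (up (2 / c * INR M0)) <= M)%nat -> INR M0 <= c / 2 * INR (S M)).
    { intros M HM. apply le_INR in HM. rewrite S_INR.
      destruct (archimed (2 / c * INR M0)) as [H1 _].
      assert (0 <= 2 / c * INR M0) by (apply Rmult_le_pos; [apply Rlt_le, Rdiv_lt_0_compat|apply pos_INR]; lra).
      rewrite INR_IZR_INZ, Z2Nat.id in HM by (apply le_IZR; lra).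
      assert (2 / c * INR M0 <= INR M + 1) by lra.
      apply Rmult_le_compat_l with (r := c/2) in H0; [|lra].
      replace (c / 2 * (2 / c * INR M0)) with (INR M0) in H0 by (field; lra). lra. }
    intros M M' H1 H2. destruct (Nat.le_ge_cases M M') as [HMM|HMM].
    - eapply Rle_lt_trans. apply (box_tail_bound d F A c M M'); auto.
      rewrite Ropp_mult_distr_l_reverse. apply HM0, Hup; auto.
    - rewrite Cabs_opp_sub. eapply Rle_lt_trans. apply (box_tail_bound d F A c M' M); auto.
      rewrite Ropp_mult_distr_l_reverse. apply HM0, Hup; auto. }
  destruct (Cx_cauchy_complete s Hcauchy) as [l Hl].
  assert (Hsum : has_lsum d F (lsum d F)).
  { unfold lsum. apply epsilon_spec. exists l; exact Hl. }
  split; auto.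
  apply Rnot_lt_le. intro Hlt.
  destruct (Hsum (Cabs (lsum d F) - A * exp_sum_const d c)) as [M0 HM0]; [lra|].
  specialize (HM0 M0 (le_n _)). fold (s M0) in HM0.
  pose proof (Cabs_sub_le (lsum d F) (s M0)). rewrite Cabs_opp_sub in H.
  pose proof (Hpart M0). lra.
Qed.
Lemma conv_bound : forall d g h A B a a', (1 <= d)%nat -> 0 < a' < a -> 0 <= A -> 0 <= B ->
  (forall k, length k = d -> Cabs (g k) <= A * exp (- a * znorm k)) ->
  (forall k, length k = d -> Cabs (h k) <= B * exp (- a * znorm k)) ->
  forall n, length n = d -> Cabs (conv d g h n) <= A * B * exp_sum_const d (a - a') * exp (- a' * znorm n).
Proof.
  intros d g h A B a a' Hd Ha HA HB Hg Hh n Hn. unfold conv.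
  assert (0 <= A * B * exp (- a' * znorm n)) by
    (apply Rmult_le_pos; [apply Rmult_le_pos; auto| apply Rlt_le, exp_pos]).
  destruct (lsum_bound d (fun k => Cmul (g k) (h (zsub n k))) (A * B * exp (- a' * znorm n)) (a - a'))
    as [_ H2]; auto; try lra.
  - intros k Hk. rewrite Cabs_mul.
    assert (Hl : length (zsub n k) = d) by (rewrite zsub_length; lia).
    apply Rle_trans with (A * exp (- a * znorm k) * (B * exp (- a * znorm (zsub n k)))).
    { apply Rmult_le_compat; [apply Cabs_nonneg|apply Cabs_nonneg|apply Hg; auto|apply Hh; auto]. }
    replace (A * exp (- a * znorm k) * (B * exp (- a * znorm (zsub n k)))) with
      (A * B * (exp (- a * znorm k) * exp (- a * znorm (zsub n k)))) by ring.
    replace (A * B * exp (- a' * znorm n) * exp (- (a - a') * znorm k)) with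
      (A * B * (exp (- a' * znorm n) * exp (- (a - a') * znorm k))) by ring.
    apply Rmult_le_compat_l. apply Rmult_le_pos; auto.
    rewrite <- !exp_plus. apply exp_le.
    pose proof (znorm_tri n k ltac:(lia)).
    pose proof (znorm_nonneg k). pose proof (znorm_nonneg (zsub n k)).
    assert (a' * znorm n <= a' * (znorm k + znorm (zsub n k))) by (apply Rmult_le_compat_l; lra).
    assert (a' * znorm (zsub n k) <= a * znorm (zsub n k)) by (apply Rmult_le_compat_r; lra).
    lra.
Qed.

(** Each convolution with u costs an arbitrarily small amount s of decay rate:
    |u^j(n)| <= K exp(-(rho - j s)|n|) uniformly in u with |u(n)| <= C exp(-rho|n|). *)
Lemma cpow_bound : forall d rho s C j, (1 <= d)%nat -> 0 < s -> INR j * s < rho -> 0 < C ->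
  exists K, 0 <= K /\ forall u : Zd -> Cx,
    (forall n, length n = d -> Cabs (u n) <= C * exp (- rho * znorm n)) ->
    forall n, length n = d -> Cabs (cpow d u j n) <= K * exp (- (rho - INR j * s) * znorm n).
Proof.
  intros d rho s C j Hd Hs Hj HC. induction j.
  - exists 1. split; [lra|]. intros u Hu n Hn. simpl cpow. unfold delta0.
    destruct (forallb (Z.eqb 0) n) eqn:E.
    + rewrite znorm_zn, zn_zero, Cabs_C1 by auto. rewrite Rmult_0_r, exp_0. lra.
    + rewrite Cabs_C0, Rmult_1_l. apply Rlt_le, exp_pos.
  - rewrite S_INR in Hj.
    assert (Hjs : 0 <= INR j * s) by (apply Rmult_le_pos; [apply pos_INR|lra]).
    destruct IHj as [K [HK HKb]]; [lra|].
    exists (C * K * exp_sum_const d s). split.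
    { apply Rmult_le_pos. apply Rmult_le_pos; lra. apply Rlt_le, exp_sum_const_pos; auto. }
    intros u Hu n Hn. simpl cpow. rewrite S_INR.
    replace s with ((rho - INR j * s) - (rho - (INR j + 1) * s)) at 1 by ring.
    apply conv_bound; auto; try lra.
    + intros k Hk. eapply Rle_trans. apply Hu; auto. apply Rmult_le_compat_l. lra. apply exp_le.
      pose proof (znorm_nonneg k). nra.
Qed.

Lemma fhat_bound : forall d fhat a, (1 <= d)%nat -> 0 < a -> real_trig_poly d fhat ->
  exists F, 0 <= F /\ forall k, length k = d -> Cabs (fhat k) <= F * exp (- a * znorm k).
Proof.
  intros d fhat a Hd Ha [[Mf HMf] _].
  set (F0 := sumR (boxZ d Mf) (fun k => Cabs (fhat k))).
  assert (HF0 : 0 <= F0) by (apply sumR_nonneg; intros; apply Cabs_nonneg).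
  exists (F0 * exp (a * INR Mf)). split. apply Rmult_le_pos; auto. apply Rlt_le, exp_pos.
  intros k Hk. destruct (Rlt_le_dec (INR Mf) (znorm k)).
  - rewrite HMf; auto. rewrite Cabs_C0. apply Rmult_le_pos. apply Rmult_le_pos; auto.
    apply Rlt_le, exp_pos. apply Rlt_le, exp_pos.
  - assert (Hin : In k (boxZ d Mf)).
    { apply boxZ_in_zn; auto. rewrite znorm_zn, INR_IZR_INZ in r. apply le_IZR in r. auto. }
    pose proof (sumR_in_le (boxZ d Mf) (fun k => Cabs (fhat k)) k (fun _ _ => Cabs_nonneg _) Hin).
    simpl in H. fold F0 in H. rewrite Rmult_assoc, <- exp_plus.
    assert (1 <= exp (a * INR Mf + - a * znorm k)).
    { rewrite <- exp_0. apply exp_le. assert (a * znorm k <= a * INR Mf) by (apply Rmult_le_compat_l; lra). lra. }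
    nra.
Qed.

Lemma Su_bound : forall d p fhat rho C, (1 <= d)%nat -> (2 <= p)%nat -> 0 < rho -> 0 < C ->
  real_trig_poly d fhat ->
  exists K, 0 <= K /\ forall u : Zd -> Cx,
    (forall n, length n = d -> Cabs (u n) <= C * exp (- rho * znorm n)) ->
    forall n n', length n = d -> length n' = d ->
      Cabs (Su d p fhat u n n') <= K * exp (- (9 * rho / 10) * znorm (zsub n n')).
Proof.
  intros d p fhat rho C Hd Hp Hr HC Hf.
  assert (HpR : 2 <= INR p) by (apply (le_INR 2); auto).
  set (s := rho / (10 * INR p)).
  assert (Hs : 0 < s) by (apply Rdiv_lt_0_compat; lra).
  assert (Hsp : INR p * s = rho / 10) by (unfold s; field; lra).
  destruct (cpow_bound d rho s C (p - 1) Hd Hs) as [K [HK HKb]]; auto.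
  { rewrite minus_INR by lia. simpl INR. nra. }
  rewrite minus_INR in HKb by lia. simpl INR in HKb.
  set (a := rho - (INR p - 1) * s).
  assert (Ha : 9 * rho / 10 < a) by (unfold a; lra).
  destruct (fhat_bound d fhat a Hd ltac:(lra) Hf) as [F [HF HFb]].
  exists (INR p * (F * K * exp_sum_const d s)). split.
  { apply Rmult_le_pos. lra. apply Rmult_le_pos. apply Rmult_le_pos; auto. apply Rlt_le, exp_sum_const_pos; auto. }
  intros u Hu n n' Hn Hn'. unfold Su. rewrite Cabs_scal, Rabs_right by lra. rewrite Rmult_assoc.
  apply Rmult_le_compat_l. lra.
  replace s with (a - 9 * rho / 10) at 1 by (unfold a; lra).
  apply conv_bound; auto. lra.
  rewrite zsub_length; lia.
Qed.


(** ** 5. The resonant set and the measure of its sections *)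

Lemma dsum_nonneg : forall nu th n, 0 <= dsum nu th n.
Proof.
  induction nu; destruct th; destruct n; simpl; try lra.
  specialize (IHnu th n). pose proof (pow2_ge_0 (a * IZR z + r)). lra.
Qed.

(** As a function of theta_j alone, the diagonal entry is c + (a + theta_j)^2 with c >= 0. *)
Lemma dsum_set : forall j nu th n t, (j < length nu)%nat -> length nu = length th -> length th = length n ->
  dsum nu (set_nthR th j t) n =
    (dsum nu th n - (nth j nu 0 * IZR (nth j n 0%Z) + nth j th 0) ^ 2)
    + (nth j nu 0 * IZR (nth j n 0%Z) + t) ^ 2 /\
  0 <= dsum nu th n - (nth j nu 0 * IZR (nth j n 0%Z) + nth j th 0) ^ 2.
Proof.
  induction j; intros nu th n t Hj H1 H2;
    destruct nu as [|x nu]; destruct th as [|y th]; destruct n as [|z n]; simpl in *; try lia.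
  - split. ring. pose proof (dsum_nonneg nu th n). lra.
  - destruct (IHj nu th n t) as [A B]; try lia. rewrite A. split. ring.
    pose proof (pow2_ge_0 (x * IZR z + y)). lra.
Qed.

Lemma quad_interval : forall c a m dl t, 0 <= c -> 0 < dl ->
  Rabs (c + (a + t) ^ 2 - m) < dl ->
  let s := sqrt (Rmax 0 (m - c)) in
  (- a + s - sqrt dl < t < - a + s + sqrt dl) \/ (- a - s - sqrt dl < t < - a - s + sqrt dl).
Proof.
  intros c a m dl t Hc Hdl H s.
  set (x := Rabs (a + t)).
  assert (Hx : 0 <= x) by apply Rabs_pos.
  assert (Hx2 : x * x = (a + t) ^ 2).
  { unfold x; rewrite <- Rabs_mult, Rabs_right; [ring|]. apply Rle_ge; sqr_nonneg (a+t); lra. }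
  assert (Hs : 0 <= s) by apply sqrt_pos.
  assert (Hxs : Rabs (x - s) < sqrt dl).
  { rewrite <- sqrt_Rsqr_abs. apply sqrt_lt_1_alt. split. apply Rle_0_sqr. unfold Rsqr.
    unfold Rmax in s. destruct (Rle_dec 0 (m - c)).
    - assert (s * s = m - c) by (unfold s; apply sqrt_sqrt; auto).
      apply Rabs_def2 in H. destruct H.
      destruct (Rle_dec x s).
      + assert ((x - s) * (x - s) <= (s - x) * (s + x)) by nra. nra.
      + assert ((x - s) * (x - s) <= (x - s) * (x + s)) by nra. nra.
    - assert (s = 0) by (unfold s; apply sqrt_0). rewrite H0.
      apply Rabs_def2 in H. destruct H. nra. }
  apply Rabs_def2 in Hxs. destruct Hxs.
  unfold x in *. destruct (Rle_dec 0 (a + t)).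
  - rewrite Rabs_right in * by lra. left; lra.
  - rewrite Rabs_left in * by lra. right; lra.
Qed.

Lemma cover_intervals : forall (S : R -> Prop) (I : list (R * R)) c,
  (forall x, In x I -> fst x <= snd x) ->
  (forall t, S t -> exists x, In x I /\ fst x < t < snd x) ->
  fold_right (fun x acc => (snd x - fst x) + acc) 0 I <= c ->
  outer_mes_le S c.
Proof.
  intros S I c HI HS Hc eta He.
  assert (Hpartial : forall (I : list (R * R)) K, (forall x, In x I -> fst x <= snd x) ->
    sum_f_R0 (fun k => snd (nth k I (0, 0)) - fst (nth k I (0, 0))) K
      <= fold_right (fun x acc => (snd x - fst x) + acc) 0 I).
  { clear. induction I as [|x I IH]; intros K HI.
    - simpl. induction K; simpl; lra.
    - assert (H0 : 0 <= fold_right (fun x acc => (snd x - fst x) + acc) 0 I).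
      { clear IH. induction I; simpl. lra.
        pose proof (HI a (or_intror (or_introl eq_refl))).
        assert (0 <= fold_right (fun x acc => (snd x - fst x) + acc) 0 I); [|lra].
        apply IHI. intros y [<-|Hy]. apply HI; left; auto. apply HI; right; right; auto. }
      destruct K.
      + simpl. rewrite <- (Rplus_0_r (snd x - fst x)) at 1. apply Rplus_le_compat_l. exact H0.
      + rewrite decomp_sum by lia. simpl. simpl pred.
        pose proof (IH K (fun y h => HI y (or_intror h))). lra. }
  exists (fun k => fst (nth k I (0,0))), (fun k => snd (nth k I (0,0))).
  split; [|split].
  - intros k. destruct (Nat.lt_ge_cases k (length I)).
    + apply HI, nth_In; auto.
    + rewrite nth_overflow; simpl; auto; lra.
  - intros t Ht. destruct (HS t Ht) as [x [Hx Hxt]]. destruct (In_nth I x (0,0) Hx) as [k [_ Hk]].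
    exists k. rewrite Hk. auto.
  - intros K. pose proof (Hpartial I K HI). lra.
Qed.

Definition resonant_set (d M : nat) (nu : list R) (m dl : R) (th : list R) : Prop :=
  exists n, In n (boxZ d M) /\ Rabs (dsum nu th n - m) < dl.

Lemma resonant_section_measure : forall d M nu m dl j th c,
  0 < dl -> (j < d)%nat -> length nu = d -> length th = d ->
  INR (length (boxZ d M)) * (4 * sqrt dl) <= c ->
  outer_mes_le (section (resonant_set d M nu m dl) th j) c.
Proof.
  intros d M nu m dl j th c Hdl Hj Hnu Hth Hc.
  set (a_ := fun n : Zd => nth j nu 0 * IZR (nth j n 0%Z)).
  set (c_ := fun n : Zd => dsum nu th n - (a_ n + nth j th 0) ^ 2).
  set (s_ := fun n : Zd => sqrt (Rmax 0 (m - c_ n))).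
  set (sd := sqrt dl).
  assert (Hsd : 0 <= sd) by apply sqrt_pos.
  apply cover_intervals with (I := flat_map (fun n => [(- a_ n + s_ n - sd, - a_ n + s_ n + sd);
                                                    (- a_ n - s_ n - sd, - a_ n - s_ n + sd)]) (boxZ d M)).
  - intros x Hx. apply in_flat_map in Hx. destruct Hx as [n [_ Hx]].
    destruct Hx as [<-|[<-|[]]]; simpl; lra.
  - intros t [n [Hn Hlt]]. pose proof (boxZ_len _ _ _ Hn) as Hln.
    destruct (dsum_set j nu th n t) as [E1 E2]; try lia.
    rewrite E1 in Hlt. fold (a_ n) in Hlt, E2. fold (c_ n) in Hlt, E2.
    destruct (quad_interval (c_ n) (a_ n) m dl t E2 Hdl Hlt) as [H|H];
      (eexists; split; [apply in_flat_map; exists n; split; [exact Hn|]|]).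
    + left; reflexivity.
    + exact H.
    + right; left; reflexivity.
    + exact H.
  - replace (fold_right _ 0 _) with (INR (length (boxZ d M)) * (4 * sd)); [exact Hc|].
    clear Hc. induction (boxZ d M) as [|n l IH]; simpl; [ring|].
    rewrite <- IH. destruct (length l); simpl; ring.
Qed.

(** ** 6. Invertibility of diagonally dominant matrices *)

Definition sumN (P : nat) (f : nat -> Cx) : Cx := fold_right (fun i acc => Cadd (f i) acc) C0 (seq 0 P).

Lemma sumN_ext : forall P f g, (forall k, (k < P)%nat -> f k = g k) -> sumN P f = sumN P g.
Proof.
  intros P f g H. unfold sumN.
  assert (Hseq : forall k, In k (seq 0 P) -> f k = g k) by (intros k Hk; apply in_seq in Hk; apply H; lia).
  clear H. induction (seq 0 P); simpl; auto.
  rewrite Hseq by (left; auto). rewrite IHl; auto. intros; apply Hseq; right; auto.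
Qed.

(** The linear algebra fact we need, that a square matrix with trivial left kernel
    has a two-sided inverse, is taken from MathComp's matrix library over the
    complex numbers [R[i]]; this module transports it to [Cx]-valued matrices
    indexed by [nat]. *)
Module MatrixBridge.
Import ssreflect ssrfun ssrbool eqtype ssrnat seq fintype bigop ssralg matrix mxalgebra Rstruct complex.
Import GRing.Theory.
Local Open Scope ring_scope.

Definition phi (z : Cx) : R[i] := Complex (re z) (im z).
Definition psi (z : R[i]) : Cx := mkC (Re z) (Im z).

Lemma psi_phi z : psi (phi z) = z. Proof. by case: z. Qed.
Lemma phi_psi z : phi (psi z) = z. Proof. by case: z. Qed.
Lemma phi_inj z w : phi z = phi w -> z = w.
Proof. by move=> H; rewrite -(psi_phi z) H psi_phi. Qed.

Lemma phi_add z w : phi (Cadd z w) = phi z + phi w. Proof. by case: z; case: w. Qed.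
Lemma phi_mul z w : phi (Cmul z w) = phi z * phi w. Proof. by case: z => a b; case: w => c e. Qed.
Lemma phi_0 : phi C0 = 0. Proof. by []. Qed.
Lemma phi_1 : phi Defs.C1 = 1. Proof. by []. Qed.

Lemma phi_sumN (P : nat) f : phi (sumN P f) = \sum_(i < P) phi (f i).
Proof.
  have seq_iota a n : List.seq a n = iota a n by elim: n a => [|n IH] a //=; rewrite IH.
  rewrite /sumN -(big_mkord xpredT (fun i => phi (f i))) /index_iota subn0 -seq_iota.
  elim: (List.seq 0 P) => [|a l IH] /=; first by rewrite big_nil.
  by rewrite big_cons phi_add IH.
Qed.

Definition ow (P : nat) (f : 'I_P -> R[i]) (i : nat) : Cx :=
  match @insub nat (fun x => (x < P)%N) _ i with Some k => psi (f k) | None => C0 end.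
Definition ow2 (P : nat) (f : 'I_P -> 'I_P -> R[i]) (i j : nat) : Cx :=
  match @insub nat (fun x => (x < P)%N) _ i, @insub nat (fun x => (x < P)%N) _ j with
  | Some a, Some b => psi (f a b) | _, _ => C0 end.
Arguments ow {P}.
Arguments ow2 {P}.

Lemma ow_ord P f (k : 'I_P) : ow f k = psi (f k).
Proof. by rewrite /ow valK. Qed.

Lemma ow2_nat P f i j (Hi : (i < P)%N) (Hj : (j < P)%N) :
  @ow2 P f i j = psi (f (Ordinal Hi) (Ordinal Hj)).
Proof. by rewrite /ow2 (@insubT nat (fun x => (x < P)%N) _ i Hi) (@insubT nat (fun x => (x < P)%N) _ j Hj). Qed.

Lemma ow2_mul_one P (M N : 'M[R[i]]_P) i j : M *m N = 1%:M -> Peano.lt i P -> Peano.lt j P ->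
  sumN P (fun k => Cmul (ow2 (fun a b => M a b) i k) (ow2 (fun a b => N a b) k j))
    = if Nat.eqb i j then Defs.C1 else C0.
Proof.
  move=> MN /ltP Hi /ltP Hj. apply: phi_inj. rewrite phi_sumN.
  have := congr1 (fun X : 'M[R[i]]_P => X (Ordinal Hi) (Ordinal Hj)) MN. rewrite !mxE => E.
  transitivity ((Ordinal Hi == Ordinal Hj)%:R : R[i]).
  - rewrite -E. apply: eq_bigr => k _.
    have ord_eta : Ordinal (ltn_ord k) = k by apply: val_inj.
    by rewrite phi_mul (@ow2_nat P _ i k Hi (ltn_ord k)) (@ow2_nat P _ k j (ltn_ord k) Hj) ord_eta !phi_psi.
  - case: (Nat.eqb_spec i j) => [E2|Hne].
    + have -> : (Ordinal Hi == Ordinal Hj) = true by apply/eqP; apply: val_inj; exact E2.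
      by rewrite phi_1.
    + rewrite phi_0. case: eqP => // E2. exfalso; apply: Hne. by case: E2.
Qed.

Lemma finite_inverse (P : nat) (A : nat -> nat -> Cx) :
  (forall w : nat -> Cx, (forall j, Peano.lt j P -> sumN P (fun i => Cmul (w i) (A i j)) = C0) ->
     forall i, Peano.lt i P -> w i = C0) ->
  exists B : nat -> nat -> Cx, forall i j, Peano.lt i P -> Peano.lt j P ->
    sumN P (fun k => Cmul (A i k) (B k j)) = (if Nat.eqb i j then Defs.C1 else C0) /\
    sumN P (fun k => Cmul (B i k) (A k j)) = (if Nat.eqb i j then Defs.C1 else C0).
Proof.
  move=> HA.
  pose Mx := \matrix_(i < P, j < P) phi (A i j).
  have HMx i j : Peano.lt i P -> Peano.lt j P -> ow2 (fun a b => Mx a b) i j = A i j.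
  { move=> /ltP Hi /ltP Hj. by rewrite (@ow2_nat P _ i j Hi Hj) mxE psi_phi. }
  have Hu : Mx \in unitmx.
  { rewrite -row_free_unit; apply: inj_row_free => v Hv.
    have Hw := HA (ow (fun k => v ord0 k)).
    apply/rowP => k. rewrite mxE.
    have -> : v ord0 k = phi (ow (fun k => v ord0 k) k) by rewrite ow_ord phi_psi.
    rewrite Hw ?phi_0 //; last by apply/ltP.
    move=> j /ltP Hj. apply: phi_inj. rewrite phi_sumN phi_0.
    transitivity ((v *m Mx) ord0 (Ordinal Hj)); last by rewrite Hv mxE.
    rewrite mxE. apply: eq_bigr => i _. by rewrite phi_mul ow_ord phi_psi mxE. }
  exists (ow2 (fun a b => invmx Mx a b)) => i j Hi Hj. split.
  - rewrite -(@ow2_mul_one P _ _ i j (mulmxV Hu) Hi Hj). apply: sumN_ext => k Hk.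
    by rewrite HMx //; apply/ltP.
  - rewrite -(@ow2_mul_one P _ _ i j (mulVmx Hu) Hi Hj). apply: sumN_ext => k Hk.
    by rewrite (HMx k j) //; apply/ltP.
Qed.

End MatrixBridge.

(** ** 7. Inverses and Green's functions on a finite set of lattice sites *)

Lemma sumC_sumN : forall (l : list Zd) g, sumC l g = sumN (length l) (fun i => g (nth i l nil)).
Proof.
  assert (Hshift : forall P s (f : nat -> Cx),
    fold_right (fun i acc => Cadd (f i) acc) C0 (seq (S s) P) =
    fold_right (fun i acc => Cadd (f (S i)) acc) C0 (seq s P)).
  { induction P; intros; simpl; auto. rewrite IHP. auto. }
  induction l; intros; simpl; [reflexivity|].
  unfold sumN. simpl. rewrite Hshift. f_equal. rewrite IHl. reflexivity.
Qed.

Lemma zeqb_spec : forall x y, zeqb x y = true <-> x = y.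
Proof. intros; unfold zeqb; destruct (list_eq_dec Z.eq_dec x y); split; intros; congruence. Qed.
Lemma zeqb_refl : forall x, zeqb x x = true.
Proof. intros; apply zeqb_spec; auto. Qed.
Lemma zeqb_false : forall x y, x <> y -> zeqb x y = false.
Proof. intros. destruct (zeqb x y) eqn:E; auto. apply zeqb_spec in E; contradiction. Qed.
Lemma zeqb_sym : forall x y, zeqb x y = zeqb y x.
Proof.
  intros. destruct (zeqb x y) eqn:E.
  - apply zeqb_spec in E. subst. now rewrite zeqb_refl.
  - symmetry. apply zeqb_false. intros <-. rewrite zeqb_refl in E. discriminate.
Qed.

Fixpoint pos (x : Zd) (l : list Zd) : nat :=
  match l with nil => 0%nat | y :: l' => if zeqb x y then 0%nat else S (pos x l') end.

Lemma nth_pos : forall l x, In x l -> nth (pos x l) l nil = x /\ (pos x l < length l)%nat.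
Proof.
  induction l; intros x Hx; simpl in *. contradiction.
  destruct (zeqb x a) eqn:E. apply zeqb_spec in E. subst. split; auto; lia.
  destruct Hx as [<-|Hx]. rewrite zeqb_refl in E; discriminate.
  destruct (IHl x Hx). split; auto; lia.
Qed.

Lemma pos_nth : forall l i, NoDup l -> (i < length l)%nat -> pos (nth i l nil) l = i.
Proof.
  induction l; intros i Hl Hi; simpl in *. lia.
  inversion Hl; subst. destruct i.
  - rewrite zeqb_refl; auto.
  - rewrite zeqb_false. rewrite IHl; auto; lia.
    intro E. apply H1. rewrite <- E. apply nth_In. lia.
Qed.

Lemma zeqb_pos : forall l n n', NoDup l -> In n l -> In n' l -> zeqb n n' = Nat.eqb (pos n l) (pos n' l).
Proof.
  intros l n n' Hl Hn Hn'. destruct (nth_pos l n Hn) as [E1 L1], (nth_pos l n' Hn') as [E2 L2].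
  destruct (Nat.eqb_spec (pos n l) (pos n' l)) as [E|E].
  - rewrite <- E1, <- E2, E. apply zeqb_refl.
  - apply zeqb_false. intros <-. auto.
Qed.

Lemma inverse_on_of_injective : forall pts (A : Zd -> Zd -> Cx), NoDup pts ->
  (forall w : Zd -> Cx, (forall n', In n' pts -> sumC pts (fun k => Cmul (w k) (A k n')) = C0) ->
     forall n, In n pts -> w n = C0) ->
  exists G, is_inverse_on pts A G.
Proof.
  intros pts A Hnd Hinj.
  set (An := fun i j => A (nth i pts nil) (nth j pts nil)).
  destruct (MatrixBridge.finite_inverse (length pts) An) as [B HB].
  { intros w Hw i Hi.
    assert (Hw' : forall n', In n' pts -> sumC pts (fun k => Cmul (w (pos k pts)) (A k n')) = C0).
    { intros n' Hn'. destruct (nth_pos pts n' Hn') as [E L]. rewrite <- (Hw _ L), sumC_sumN.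
      apply sumN_ext. intros k Hk. unfold An. rewrite pos_nth, E; auto. }
    pose proof (Hinj _ Hw' (nth i pts nil) (nth_In _ _ Hi)) as Hz. cbv beta in Hz. rewrite pos_nth in Hz; auto. }
  exists (fun n n' => B (pos n pts) (pos n' pts)). intros n n' Hn Hn'.
  destruct (nth_pos pts n Hn) as [E1 L1], (nth_pos pts n' Hn') as [E2 L2].
  destruct (HB _ _ L1 L2) as [H1 H2]. rewrite (zeqb_pos pts n n'), !sumC_sumN; auto. split.
  - rewrite <- H1. apply sumN_ext. intros k Hk. unfold An. rewrite pos_nth, E1; auto.
  - rewrite <- H2. apply sumN_ext. intros k Hk. unfold An. rewrite pos_nth, E2; auto.
Qed.

Lemma sumC_zero : forall l (f : Zd -> Cx), (forall k, In k l -> f k = C0) -> sumC l f = C0.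
Proof.
  induction l; intros; simpl; auto.
  rewrite H by (left; auto). rewrite IHl. apply Cadd_0_l. intros; apply H; right; auto.
Qed.

Lemma sumC_delta : forall l n (f : Zd -> Cx), NoDup l -> In n l ->
  sumC l (fun k => if zeqb n k then f k else C0) = f n.
Proof.
  induction l; intros n f Hl Hn; simpl in *. contradiction. inversion Hl; subst.
  destruct Hn as [<-|Hn].
  - rewrite zeqb_refl, sumC_zero. unfold Cadd, C0; destruct (f a); ceq.
    intros k Hk. rewrite zeqb_false; auto. intro; subst; contradiction.
  - rewrite zeqb_false. rewrite IHl; auto. apply Cadd_0_l. intro; subst; contradiction.
Qed.

Lemma argmax_list : forall (A : Type) (l : list A) (f : A -> R), l <> nil ->
  exists x, In x l /\ forall y, In y l -> f y <= f x.
Proof.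
  induction l; intros f H. congruence.
  destruct l as [|b l]. exists a. split. left; auto. intros y [<-|[]]; lra.
  destruct (IHl f ltac:(discriminate)) as [x [Hx Hm]].
  destruct (Rle_dec (f a) (f x)).
  - exists x. split. right; auto. intros y [<-|Hy]; auto.
  - exists a. split. left; auto. intros y [<-|Hy]. lra. pose proof (Hm y Hy); lra.
Qed.

Definition diag_plus (Dg : Zd -> R) (E : Zd -> Zd -> Cx) (n k : Zd) : Cx :=
  Cadd (if zeqb n k then mkC (Dg n) 0 else C0) (E n k).

Lemma sumC_diag_plus_l : forall pts Dg E (G : Zd -> Zd -> Cx) n n', NoDup pts -> In n pts ->
  sumC pts (fun k => Cmul (diag_plus Dg E n k) (G k n'))
    = Cadd (Cmul (mkC (Dg n) 0) (G n n')) (sumC pts (fun k => Cmul (E n k) (G k n'))).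
Proof.
  intros. unfold diag_plus.
  rewrite (sumC_ext pts _ (fun k => Cadd (if zeqb n k then Cmul (mkC (Dg n) 0) (G k n') else C0)
      (Cmul (E n k) (G k n')))).
  - rewrite sumC_add, (sumC_delta pts n (fun k => Cmul (mkC (Dg n) 0) (G k n'))) by auto. reflexivity.
  - intros k Hk. rewrite Cmul_distr_r. destruct (zeqb n k); auto. rewrite Cmul_0_l. auto.
Qed.

Lemma sumC_diag_plus_r : forall pts Dg E (w : Zd -> Cx) n', NoDup pts -> In n' pts ->
  sumC pts (fun k => Cmul (w k) (diag_plus Dg E k n'))
    = Cadd (Cmul (w n') (mkC (Dg n') 0)) (sumC pts (fun k => Cmul (w k) (E k n'))).
Proof.
  intros. unfold diag_plus.
  rewrite (sumC_ext pts _ (fun k => Cadd (if zeqb n' k then Cmul (w k) (mkC (Dg k) 0) else C0)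
      (Cmul (w k) (E k n')))).
  - rewrite sumC_add, (sumC_delta pts n' (fun k => Cmul (w k) (mkC (Dg k) 0))) by auto. reflexivity.
  - intros k Hk. rewrite Cmul_distr_l, (zeqb_sym n' k). destruct (zeqb k n'); auto.
    rewrite Cmul_0_r. auto.
Qed.

Lemma sumC_mul_bound : forall pts (a b : Zd -> Cx) A B, 0 <= A ->
  (forall k, In k pts -> Cabs (a k) <= A) -> (forall k, In k pts -> Cabs (b k) <= B) ->
  Cabs (sumC pts (fun k => Cmul (a k) (b k))) <= INR (length pts) * (A * B).
Proof.
  intros. eapply Rle_trans. apply sumC_abs. rewrite <- sumR_const. apply sumR_le.
  intros k Hk. rewrite Cabs_mul. apply Rmult_le_compat; auto using Cabs_nonneg.
Qed.

(** Diagonal dominance: if |D| >= dl and |E| <= e entrywise with |pts| e < dl,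
    a maximal entry of a left null vector must vanish, so D + E is invertible. *)
Lemma diag_dominant_inverse : forall pts (Dg : Zd -> R) (E : Zd -> Zd -> Cx) dl e,
  NoDup pts -> 0 < dl -> (forall n, In n pts -> dl <= Rabs (Dg n)) ->
  (forall n k, In n pts -> In k pts -> Cabs (E n k) <= e) -> INR (length pts) * e < dl ->
  exists G, is_inverse_on pts (diag_plus Dg E) G.
Proof.
  intros pts Dg E dl e Hnd Hdl HD HE HPe.
  apply inverse_on_of_injective; auto. intros w Hw n Hn.
  destruct (argmax_list _ pts (fun k => Cabs (w k))) as [n0 [Hn0 Hmax]].
  { destruct pts; [contradiction|discriminate]. }
  specialize (Hw n0 Hn0). rewrite sumC_diag_plus_r in Hw by auto.
  set (S := sumC pts (fun k => Cmul (w k) (E k n0))) in Hw.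
  assert (HS : Cabs S <= INR (length pts) * (Cabs (w n0) * e)).
  { apply sumC_mul_bound; auto using Cabs_nonneg. }
  assert (Habs : Rabs (Dg n0) * Cabs (w n0) <= INR (length pts) * e * Cabs (w n0)).
  { assert (Hx : Cmul (w n0) (mkC (Dg n0) 0) = Csub C0 S)
      by (rewrite <- Hw; unfold Csub, Cadd; ceq).
    pose proof (Cabs_sub_tri C0 S) as Htri. rewrite <- Hx, Cabs_mul, Cabs_real, Cabs_C0 in Htri.
    lra. }
  pose proof (HD n0 Hn0). pose proof (Cabs_nonneg (w n0)).
  assert (Hw0 : Cabs (w n0) = 0).
  { destruct (Req_dec (Cabs (w n0)) 0); auto.
    assert (Rabs (Dg n0) <= INR (length pts) * e) by (apply Rmult_le_reg_r with (Cabs (w n0)); lra).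
    lra. }
  pose proof (Hmax n Hn). pose proof (Cabs_nonneg (w n)). apply Cabs_eq0. lra.
Qed.

Definition weighted (G : Zd -> Zd -> Cx) (b : R) (n n' : Zd) : R :=
  Cabs (G n n') * exp (b * znorm (zsub n n')).

Lemma weighted_nonneg : forall G b n n', 0 <= weighted G b n n'.
Proof. intros; unfold weighted. apply Rmult_le_pos; [apply Cabs_nonneg|apply Rlt_le, exp_pos]. Qed.

(** One step of the maximum principle: reading row n of (D + E) G = 1 and using
    exp(b|n-n'|) <= exp(b|n-k|) exp(b|k-n'|), the weighted entry at (n,n') is
    controlled by the largest weighted entry in column n'. *)
Lemma green_weighted_step : forall d pts (Dg : Zd -> R) (E G : Zd -> Zd -> Cx) dl e b n n' Mx,
  NoDup pts -> (forall n, In n pts -> length n = d) -> 0 <= b ->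
  (forall n, In n pts -> dl <= Rabs (Dg n)) ->
  (forall n k, In n pts -> In k pts -> weighted E b n k <= e) ->
  is_inverse_on pts (diag_plus Dg E) G -> In n pts -> In n' pts ->
  (forall k, In k pts -> weighted G b k n' <= Mx) ->
  dl * weighted G b n n' <= 1 + INR (length pts) * (e * Mx).
Proof.
  intros d pts Dg E G dl e b n n' Mx Hnd Hlen Hb HD HE HG Hn Hn' HMx.
  destruct (HG n n' Hn Hn') as [Hrow _].
  rewrite sumC_diag_plus_l in Hrow by auto.
  set (S := sumC pts (fun k => Cmul (E n k) (G k n'))) in Hrow.
  set (delta := if zeqb n n' then Defs.C1 else C0) in Hrow.
  set (w := exp (b * znorm (zsub n n'))).
  assert (Hw : 0 < w) by apply exp_pos.
  assert (Hx : Cmul (mkC (Dg n) 0) (G n n') = Csub delta S) by (rewrite <- Hrow; unfold Csub, Cadd; ceq).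
  assert (Hdiag : Rabs (Dg n) * Cabs (G n n') <= Cabs delta + Cabs S).
  { rewrite <- Cabs_real, <- Cabs_mul, Hx. apply Cabs_sub_tri. }
  assert (Hdelta : Cabs delta * w <= 1).
  { unfold delta. destruct (zeqb n n') eqn:Ez.
    - apply zeqb_spec in Ez. subst n'. unfold w. rewrite znorm_zn, zn_zsub_self, Rmult_0_r, exp_0, Cabs_C1. lra.
    - rewrite Cabs_C0. lra. }
  assert (HS : Cabs S * w <= INR (length pts) * (e * Mx)).
  { eapply Rle_trans. apply Rmult_le_compat_r. lra. apply sumC_abs.
    rewrite Rmult_comm, <- sumR_scal, <- sumR_const. apply sumR_le.
    intros k Hk. rewrite Cabs_mul.
    assert (Hsplit : w <= exp (b * znorm (zsub n k)) * exp (b * znorm (zsub k n'))).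
    { unfold w. rewrite <- exp_plus. apply exp_le. rewrite <- Rmult_plus_distr_l.
      apply Rmult_le_compat_l; auto. apply znorm_tri3; rewrite ?Hlen; auto. }
    apply Rle_trans with (weighted E b n k * weighted G b k n').
    - unfold weighted. pose proof (Cabs_nonneg (E n k)). pose proof (Cabs_nonneg (G k n')).
      rewrite (Rmult_comm w).
      replace (Cabs (E n k) * exp (b * znorm (zsub n k)) * (Cabs (G k n') * exp (b * znorm (zsub k n'))))
        with (Cabs (E n k) * Cabs (G k n') * (exp (b * znorm (zsub n k)) * exp (b * znorm (zsub k n'))))
        by ring.
      apply Rmult_le_compat_l; auto. apply Rmult_le_pos; auto.
    - apply Rmult_le_compat; auto using weighted_nonneg. }
  pose proof (HD n Hn). pose proof (Cabs_nonneg (G n n')).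
  assert (dl * Cabs (G n n') <= Rabs (Dg n) * Cabs (G n n')) by (apply Rmult_le_compat_r; auto).
  unfold weighted. fold w.
  assert (dl * (Cabs (G n n') * w) <= (Cabs delta + Cabs S) * w).
  { rewrite <- Rmult_assoc. apply Rmult_le_compat_r; lra. }
  lra.
Qed.

(** Apply the previous step at a site maximising the weighted column. *)
Lemma green_decay : forall d pts (Dg : Zd -> R) (E G : Zd -> Zd -> Cx) dl e b,
  NoDup pts -> (forall n, In n pts -> length n = d) -> 0 < dl -> 0 <= b -> 0 <= e ->
  (forall n, In n pts -> dl <= Rabs (Dg n)) ->
  (forall n k, In n pts -> In k pts -> weighted E b n k <= e) ->
  INR (length pts) * e <= dl / 2 ->
  is_inverse_on pts (diag_plus Dg E) G ->
  forall n n', In n pts -> In n' pts -> weighted G b n n' <= 2 / dl.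
Proof.
  intros d pts Dg E G dl e b Hnd Hlen Hdl Hb He HD HE HPe HG n n' Hn Hn'.
  destruct (argmax_list _ pts (fun k => weighted G b k n')) as [k0 [Hk0 Hmax]].
  { destruct pts; [contradiction|discriminate]. }
  pose proof (green_weighted_step d pts Dg E G dl e b k0 n' (weighted G b k0 n')
                Hnd Hlen Hb HD HE HG Hk0 Hn' Hmax) as Hstep.
  assert (INR (length pts) * (e * weighted G b k0 n') <= dl / 2 * weighted G b k0 n').
  { rewrite <- Rmult_assoc. apply Rmult_le_compat_r; auto using weighted_nonneg. }
  assert (weighted G b k0 n' <= 2 / dl).
  { apply Rmult_le_reg_l with dl; auto. replace (dl * (2 / dl)) with 2 by (field; lra). lra. }
  pose proof (Hmax n Hn). lra.
Qed.

Lemma opnorm_bound : forall pts (G : Zd -> Zd -> Cx) g0, 0 <= g0 ->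
  (forall n k, In n pts -> In k pts -> Cabs (G n k) <= g0) ->
  opnorm_le pts G (INR (length pts) ^ 2 * g0).
Proof.
  intros pts G g0 Hg HG v.
  set (L := l2norm pts v). set (P := INR (length pts)).
  assert (HL : 0 <= L) by apply sqrt_pos.
  assert (HP : 0 <= P) by apply pos_INR.
  assert (Hv : forall k, In k pts -> Cabs (v k) <= L).
  { intros k Hk. unfold L, l2norm. rewrite <- (sqrt_pow2 (Cabs (v k))) by apply Cabs_nonneg.
    apply sqrt_le_1_alt. apply (sumR_in_le pts (fun k => Cabs (v k) ^ 2) k); auto.
    intros; apply pow2_ge_0. }
  assert (HGv : forall n, In n pts -> Cabs (sumC pts (fun k => Cmul (G n k) (v k))) <= P * (g0 * L))
    by (intros n Hn; apply sumC_mul_bound; auto).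
  assert (Hsum : sumR pts (fun n => Cabs (sumC pts (fun k => Cmul (G n k) (v k))) ^ 2)
                   <= P * (P * (g0 * L)) ^ 2).
  { unfold P at 1. rewrite <- sumR_const. apply sumR_le.
    intros n Hn. apply pow_incr. split. apply Cabs_nonneg. auto. }
  assert (HPP : P * (P * (g0 * L)) ^ 2 <= (P ^ 2 * g0 * L) ^ 2).
  { unfold P. destruct (length pts). simpl. nra.
    assert (1 <= INR (S n)) by (apply (le_INR 1); lia).
    set (q := INR (S n)) in *.
    assert (0 <= (q * (g0 * L)) ^ 2) by apply pow2_ge_0.
    replace ((q ^ 2 * g0 * L) ^ 2) with (q * (q * (q * (g0 * L)) ^ 2)) by ring.
    replace (q * (q * (g0 * L)) ^ 2) with (1 * (q * (q * (g0 * L)) ^ 2)) at 1 by ring.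
    apply Rmult_le_compat_r; [|lra]. apply Rmult_le_pos; lra. }
  unfold l2norm at 1.
  rewrite <- (sqrt_pow2 (P ^ 2 * g0 * L)).
  2:{ apply Rmult_le_pos; auto. apply Rmult_le_pos; auto. apply pow2_ge_0. }
  apply sqrt_le_1_alt. fold P. lra.
Qed.

Lemma opnorm_mono : forall pts G c1 c2, c1 <= c2 -> opnorm_le pts G c1 -> opnorm_le pts G c2.
Proof.
  intros pts G c1 c2 H H1 v. eapply Rle_trans. apply H1. apply Rmult_le_compat_r; auto. apply sqrt_pos.
Qed.

Lemma diag_dominant_green : forall d pts (Dg : Zd -> R) (E : Zd -> Zd -> Cx) dl e b,
  NoDup pts -> (forall n, In n pts -> length n = d) -> 0 < dl -> 0 <= b -> 0 <= e ->
  (forall n, In n pts -> dl <= Rabs (Dg n)) ->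
  (forall n k, In n pts -> In k pts -> weighted E b n k <= e) ->
  INR (length pts) * e <= dl / 2 ->
  exists G, is_inverse_on pts (diag_plus Dg E) G /\
    opnorm_le pts G (INR (length pts) ^ 2 * (2 / dl)) /\
    forall n n', In n pts -> In n' pts -> Cabs (G n n') <= 2 / dl * exp (- b * znorm (zsub n n')).
Proof.
  intros d pts Dg E dl e b Hnd Hlen Hdl Hb He HD HE HPe.
  assert (Hweight : forall (F : Zd -> Zd -> Cx) n k, Cabs (F n k) <= weighted F b n k).
  { intros. unfold weighted. rewrite <- (Rmult_1_r (Cabs _)) at 1.
    apply Rmult_le_compat_l. apply Cabs_nonneg. rewrite <- exp_0. apply exp_le.
    apply Rmult_le_pos; auto using znorm_nonneg. }
  assert (HE0 : forall n k, In n pts -> In k pts -> Cabs (E n k) <= e)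
    by (intros n k Hn Hk; eapply Rle_trans; [apply Hweight|auto]).
  assert (HPe' : INR (length pts) * e < dl) by lra.
  destruct (diag_dominant_inverse pts Dg E dl e Hnd Hdl HD HE0 HPe') as [G HG].
  pose proof (green_decay d pts Dg E G dl e b Hnd Hlen Hdl Hb He HD HE HPe HG) as Hdec.
  exists G. split; [exact HG|split].
  - apply opnorm_bound. apply Rlt_le, Rdiv_lt_0_compat; lra.
    intros n k Hn Hk. eapply Rle_trans; [apply Hweight|auto].
  - intros n n' Hn Hn'. specialize (Hdec n n' Hn Hn'). unfold weighted in Hdec.
    apply Rmult_le_reg_r with (exp (b * znorm (zsub n n'))). apply exp_pos.
    rewrite Rmult_assoc, <- exp_plus. replace (- b * znorm (zsub n n') + b * znorm (zsub n n')) with 0 by ring.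
    rewrite exp_0. lra.
Qed.

(** ** 8. Asymptotics in N *)

Lemma Rpower_pos : forall x y, 0 < Rpower x y.
Proof. intros; unfold Rpower; apply exp_pos. Qed.

Lemma Rpower_ge1_mono : forall N a b, 1 <= N -> a <= b -> Rpower N a <= Rpower N b.
Proof.
  intros. destruct H0. destruct H. apply Rlt_le, Rpower_lt; auto.
  subst. unfold Rpower. rewrite ln_1, !Rmult_0_r. lra. subst; lra.
Qed.

(** exp y >= (y/k)^k, from exp(y/k) >= 1 + y/k. *)
Lemma exp_ge_pow : forall y k, 0 <= y -> (1 <= k)%nat -> (y / INR k) ^ k <= exp y.
Proof.
  intros y k Hy Hk.
  assert (HkR : 0 < INR k) by (apply lt_0_INR; lia).
  assert (exp y = exp (y / INR k) ^ k).
  { replace (exp (y / INR k)) with (exp (- (- (y / INR k)))) by (f_equal; ring).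
    rewrite <- exp_pow_nat. f_equal. field. lra. }
  rewrite H. apply pow_incr. split. apply Rmult_le_pos; auto. apply Rlt_le, Rinv_0_lt_compat; auto.
  assert (0 <= y / INR k) by (apply Rmult_le_pos; auto; apply Rlt_le, Rinv_0_lt_compat; auto).
  destruct H0. pose proof (exp_ineq1 (y / INR k) ltac:(lra)). lra. rewrite <- H0, exp_0. lra.
Qed.

(** Polynomials in N are eventually dominated by exp(c N^s), any c, s > 0: with
    s k >= D+1, exp(c N^s) >= (c/k)^k N^(sk) >= (c/k)^k N^(D+1) >= |A| 5^D N^D. *)
Lemma poly_le_exp_power : forall c s A D, 0 < c -> 0 < s -> exists N1, 1 <= N1 /\ forall N, N1 <= N ->
  A * (2 * N + 3) ^ D <= exp (c * Rpower N s).
Proof.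
  intros c s A D Hc Hs.
  destruct (archimed ((INR D + 1) / s)) as [Hk _].
  set (k := S (Z.to_nat (up ((INR D + 1) / s)))).
  assert (HkR : (INR D + 1) / s <= INR k).
  { unfold k. rewrite S_INR. destruct (Z_le_gt_dec (up ((INR D + 1) / s)) 0).
    - assert (0 < (INR D + 1) / s) by (apply Rdiv_lt_0_compat; auto; pose proof (pos_INR D); lra).
      apply IZR_le in l. lra.
    - rewrite (INR_IZR_INZ (Z.to_nat _)), Z2Nat.id by lia. lra. }
  assert (Hks : INR D + 1 <= s * INR k).
  { apply Rmult_le_compat_l with (r := s) in HkR; [|lra]. replace (s * ((INR D + 1) / s)) with (INR D + 1) in HkR by (field; lra). lra. }
  assert (HkR0 : 0 < INR k) by (apply lt_0_INR; unfold k; lia).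
  set (B := Rabs A * 5 ^ D / (c / INR k) ^ k).
  assert (Hck : 0 < (c / INR k) ^ k) by (apply pow_lt; apply Rdiv_lt_0_compat; auto).
  exists (Rmax 1 B). split. apply Rmax_l. intros N HN.
  assert (HN1 : 1 <= N) by (pose proof (Rmax_l 1 B); lra).
  assert (HNB : B <= N) by (pose proof (Rmax_r 1 B); lra).
  apply Rle_trans with ((c * Rpower N s / INR k) ^ k).
  2:{ apply exp_ge_pow. apply Rmult_le_pos. lra. apply Rlt_le, Rpower_pos. unfold k; lia. }
  replace ((c * Rpower N s / INR k) ^ k) with ((c / INR k) ^ k * (Rpower N s) ^ k)
    by (unfold Rdiv; rewrite <- Rpow_mult_distr; f_equal; ring).
  rewrite <- (Rpower_pow k (Rpower N s)) by apply Rpower_pos. rewrite Rpower_mult.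
  assert (Hp : Rpower N (INR D + 1) <= Rpower N (s * INR k)) by (apply Rpower_ge1_mono; auto).
  rewrite Rpower_plus, Rpower_1, Rpower_pow in Hp by lra.
  assert (H2N : 2 * N + 3 <= 5 * N) by lra.
  assert (A * (2 * N + 3) ^ D <= Rabs A * 5 ^ D * N ^ D).
  { eapply Rle_trans. apply Rle_abs. rewrite Rabs_mult. rewrite (Rabs_right ((2*N+3)^D)) by (apply Rle_ge, pow_le; lra).
    rewrite Rmult_assoc. apply Rmult_le_compat_l. apply Rabs_pos. rewrite <- Rpow_mult_distr. apply pow_incr. lra. }
  assert (Rabs A * 5 ^ D <= (c / INR k) ^ k * N).
  { unfold B in HNB. apply Rmult_le_compat_l with (r := (c / INR k) ^ k) in HNB; [|lra].
    replace ((c / INR k) ^ k * (Rabs A * 5 ^ D / (c / INR k) ^ k)) with (Rabs A * 5 ^ D) in HNB by (field; lra). lra. }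
  assert (0 <= N ^ D) by (apply pow_le; lra).
  assert (Rabs A * 5 ^ D * N ^ D <= (c / INR k) ^ k * N * N ^ D) by (apply Rmult_le_compat_r; auto).
  assert ((c / INR k) ^ k * (N ^ D * N) <= (c / INR k) ^ k * Rpower N (s * INR k)) by (apply Rmult_le_compat_l; lra).
  nra.
Qed.

Lemma power_dominates : forall g s c, 0 <= g < s -> 0 < c -> exists N1, 1 <= N1 /\ forall N, N1 <= N ->
  c * Rpower N g <= Rpower N s.
Proof.
  intros g s c Hg Hc.
  set (N1 := Rmax 1 (Rpower (Rmax 1 c) (/ (s - g)))).
  exists N1. split. apply Rmax_l. intros N HN.
  assert (HN1 : 1 <= N) by (pose proof (Rmax_l 1 (Rpower (Rmax 1 c) (/ (s - g)))); unfold N1 in HN; lra).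
  assert (Hc1 : c <= Rmax 1 c) by apply Rmax_r.
  assert (Hc2 : 1 <= Rmax 1 c) by apply Rmax_l.
  assert (c <= Rpower N (s - g)).
  { eapply Rle_trans. apply Hc1.
    replace (Rmax 1 c) with (Rpower (Rpower (Rmax 1 c) (/ (s - g))) (s - g)).
    2:{ rewrite Rpower_mult. replace (/ (s - g) * (s - g)) with 1 by (field; lra). apply Rpower_1; lra. }
    apply Rle_Rpower_l. lra. split. apply Rpower_pos.
    pose proof (Rmax_r 1 (Rpower (Rmax 1 c) (/ (s - g)))). unfold N1 in HN; lra. }
  replace (Rpower N s) with (Rpower N (s - g) * Rpower N g) by (rewrite <- Rpower_plus; f_equal; ring).
  apply Rmult_le_compat_r. apply Rlt_le, Rpower_pos. auto.
Qed.


Lemma sqrt_exp : forall x, sqrt (exp x) = exp (x / 2).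
Proof.
  intros. replace (exp x) with (exp (x/2) * exp (x/2)) by (rewrite <- exp_plus; f_equal; field).
  apply sqrt_square. apply Rlt_le, exp_pos.
Qed.

Lemma large_N_comparisons : forall gamma sg rho K d, 0 < gamma < sg -> sg < 1 -> 0 < rho ->
  exists N0, 1 <= N0 /\ forall N, N0 <= N ->
    4 * (2 * N + 3) ^ d <= exp (1 / 2 * Rpower N gamma) /\
    2 * (K + 1) * (2 * N + 3) ^ (2 * d) <= exp (1 / 2 * Rpower N sg) /\
    6 * Rpower N gamma <= Rpower N sg /\
    600 / rho * Rpower N gamma <= N /\
    200 / rho + 1 <= N.
Proof.
  intros gamma sg rho K d Hg Hsg Hr.
  destruct (poly_le_exp_power (1/2) gamma 4 d) as [Na [Na1 HNa]]; try lra.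
  destruct (poly_le_exp_power (1/2) sg (2 * (K + 1)) (2 * d)) as [Nb [Nb1 HNb]]; try lra.
  destruct (power_dominates gamma sg 6) as [Nc [Nc1 HNc]]; try lra.
  destruct (power_dominates gamma 1 (600 / rho)) as [Nd [Nd1 HNd]]; try lra.
  { apply Rdiv_lt_0_compat; lra. }
  exists (Rmax (Rmax Na Nb) (Rmax (Rmax Nc Nd) (200 / rho + 1))).
  split; [unfold Rmax; repeat destruct Rle_dec; lra|].
  intros N HN.
  assert (Hmax : Na <= N /\ Nb <= N /\ Nc <= N /\ Nd <= N /\ 200 / rho + 1 <= N)
    by (revert HN; unfold Rmax; repeat destruct Rle_dec; lra).
  destruct Hmax as (HNa' & HNb' & HNc' & HNd' & HNe).
  specialize (HNd N HNd'). rewrite Rpower_1 in HNd by lra. auto.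
Qed.

(** The four inequalities on N fixing the scales, with delta_N = exp(-3 N^gamma):
    (i) the resonant set is small, (ii) eps K |box| is below delta_N/2 when
    eps <= exp(-N^sigma), (iii) the resulting norm bound is at most exp(N^sigma),
    (iv) the loss 2/delta_N is absorbed by exp(rho N/100). *)
Lemma large_N_estimates : forall gamma sg rho K d, 0 < gamma < sg -> sg < 1 -> 0 < rho -> 0 <= K ->
  exists N0, 1 <= N0 /\ forall N, N0 <= N ->
    let dl := exp (- (3 * Rpower N gamma)) in
    4 * (2 * N + 3) ^ d * sqrt dl <= exp (- Rpower N gamma) /\
    (2 * N + 3) ^ (2 * d) * K * exp (- Rpower N sg) <= dl / 2 /\
    (2 * N + 3) ^ (2 * d) * (2 / dl) <= exp (Rpower N sg) /\
    2 / dl <= exp (rho * N / 100).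
Proof.
  intros gamma sg rho K d Hg Hsg Hr HK.
  destruct (large_N_comparisons gamma sg rho K d Hg Hsg Hr) as [N0 [HN0 Hcmp]].
  exists N0. split; [exact HN0|]. intros N HN dl.
  destruct (Hcmp N HN) as (HNa & HNb & HNc & HNd & HNe).
  set (gN := Rpower N gamma) in *. set (sN := Rpower N sg) in *.
  assert (HP : 0 <= (2 * N + 3) ^ (2 * d)) by (apply pow_le; lra).
  assert (H2dl : 2 / dl = 2 * exp (3 * gN)).
  { unfold dl, Rdiv. rewrite <- exp_Ropp, Ropp_involutive. ring. }
  assert (Hhalf : exp sN = exp (sN / 2) * exp (sN / 2)) by (rewrite <- exp_plus; f_equal; field).
  assert (H3g : exp (3 * gN) <= exp (sN / 2)) by (apply exp_le; lra).
  assert (HPb : 2 * (2 * N + 3) ^ (2 * d) <= exp (sN / 2)).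
  { replace (sN / 2) with (1 / 2 * sN) by field. nra. }
  repeat split.
  - unfold dl. rewrite sqrt_exp.
    replace (exp (- gN)) with (exp (1 / 2 * gN) * exp (- (3 * gN) / 2))
      by (rewrite <- exp_plus; f_equal; field).
    apply Rmult_le_compat_r; [apply Rlt_le, exp_pos|lra].
  - replace (exp (- sN)) with (/ (exp (sN / 2) * exp (sN / 2))) by (rewrite <- Hhalf, exp_Ropp; auto).
    unfold dl. rewrite exp_Ropp.
    assert (Hk : (2 * N + 3) ^ (2 * d) * K <= exp (sN / 2) / 2).
    { replace (sN / 2) with (1 / 2 * sN) by field. nra. }
    pose proof (exp_pos (sN / 2)). pose proof (exp_pos (3 * gN)).
    apply Rle_trans with (exp (sN / 2) / 2 * / (exp (sN / 2) * exp (sN / 2))).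
    + apply Rmult_le_compat_r; [apply Rlt_le, Rinv_0_lt_compat; nra|lra].
    + replace (exp (sN / 2) / 2 * / (exp (sN / 2) * exp (sN / 2))) with (/ exp (sN / 2) / 2) by (field; lra).
      apply Rmult_le_compat_r; [lra|]. apply Rinv_le_contravar; lra.
  - rewrite H2dl, Hhalf. pose proof (exp_pos (3 * gN)). nra.
  - rewrite H2dl. pose proof (exp_ineq1 1 ltac:(lra)) as He1.
    apply Rle_trans with (exp 1 * exp (3 * gN)); [apply Rmult_le_compat_r; [apply Rlt_le, exp_pos|lra]|].
    rewrite <- exp_plus. apply exp_le.
    assert (Hq : 200 / rho <= N - 1) by lra.
    apply Rmult_le_compat_l with (r := rho) in Hq; [|lra].
    replace (rho * (200 / rho)) with 200 in Hq by (field; lra).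
    assert (HgN : 600 / rho * gN * rho = 600 * gN) by (field; lra).
    assert (600 / rho * gN * rho <= N * rho) by (apply Rmult_le_compat_r; lra).
    nra.
Qed.

Lemma eps_le_exp_power : forall eps N sg, 0 < eps < 1 -> 0 < sg -> 1 <= N ->
  N <= Rpower (Rabs (ln eps)) (/ sg) -> eps <= exp (- Rpower N sg).
Proof.
  intros eps N sg Heps Hsg HN1 HN.
  assert (Hlne : ln eps < 0) by (rewrite <- ln_1; apply ln_increasing; lra).
  assert (Rpower N sg <= - ln eps).
  { replace (- ln eps) with (Rpower (Rabs (ln eps)) (/ sg * sg)).
    - rewrite <- Rpower_mult. apply Rle_Rpower_l; lra.
    - replace (/ sg * sg) with 1 by (field; lra). rewrite Rpower_1, Rabs_left; [lra|lra|].
      apply Rabs_pos_lt; lra. }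
  rewrite <- (exp_ln eps) by lra. apply exp_le. lra.
Qed.

Lemma region_pts_props : forall d N r,
  NoDup (region_pts d N r) /\
  (forall n, In n (region_pts d N r) -> In n (boxZ d (Z.to_nat (up N)))) /\
  (length (region_pts d N r) <= length (boxZ d (Z.to_nat (up N))))%nat.
Proof.
  intros. unfold region_pts. split; [|split].
  - apply NoDup_filter, boxZ_NoDup.
  - intros n Hn; apply filter_In in Hn; tauto.
  - apply filter_length_le.
Qed.

(** Off the resonant set, F_u(theta) restricted to pts is a diagonally dominant
    perturbation of its diagonal; the Green's function bounds of Section 7 then give
    the stated estimates, losing rho/10 of decay rate against the factor 2/dl. *)
Lemma green_off_resonance : forall d p fhat m eps nu th u rho K N c (pts : list Zd) dl,
  0 < eps -> 0 < rho -> 0 <= K -> 0 < dl ->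
  (forall n n', length n = d -> length n' = d ->
     Cabs (Su d p fhat u n n') <= K * exp (- (9 * rho / 10) * znorm (zsub n n'))) ->
  NoDup pts -> (forall n, In n pts -> length n = d) ->
  (forall n, In n pts -> dl <= Rabs (dsum nu th n - m)) ->
  INR (length pts) * (eps * K) <= dl / 2 ->
  INR (length pts) ^ 2 * (2 / dl) <= c ->
  2 / dl <= exp (rho * N / 100) ->
  exists G, is_inverse_on pts (Fent d p fhat m eps nu th u) G /\ opnorm_le pts G c /\
    (forall n n', In n pts -> In n' pts -> N / 10 <= znorm (zsub n n') ->
       Cabs (G n n') <= exp (- (4 * rho / 5) * znorm (zsub n n'))).
Proof.
  intros d p fhat m eps nu th u rho K N c pts dl Heps Hr HK Hdl HSu Hnd Hlen HD Hsmall Hc Hloss.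
  set (b := 9 * rho / 10).
  assert (HE : forall n k, In n pts -> In k pts ->
            weighted (fun n k => Cscal eps (Su d p fhat u n k)) b n k <= eps * K).
  { intros n k Hn Hk. unfold weighted. rewrite Cabs_scal, Rabs_right, Rmult_assoc by lra.
    apply Rmult_le_compat_l; [lra|].
    eapply Rle_trans. apply Rmult_le_compat_r. apply Rlt_le, exp_pos. apply HSu; auto.
    rewrite Rmult_assoc, <- exp_plus. unfold b.
    replace (- (9 * rho / 10) * znorm (zsub n k) + 9 * rho / 10 * znorm (zsub n k)) with 0 by ring.
    rewrite exp_0. lra. }
  destruct (diag_dominant_green d pts (fun n => dsum nu th n - m)
              (fun n k => Cscal eps (Su d p fhat u n k)) dl (eps * K) b)
    as [G (Hinv & Hop & Hdec)]; auto; try (unfold b; lra).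
  { apply Rmult_le_pos; lra. }
  exists G. split; [exact Hinv|split].
  - exact (opnorm_mono _ _ _ _ Hc Hop).
  - intros n n' Hn Hn' Hfar. eapply Rle_trans. apply Hdec; auto.
    set (z := znorm (zsub n n')) in *.
    eapply Rle_trans. apply Rmult_le_compat_r. apply Rlt_le, exp_pos. exact Hloss.
    rewrite <- exp_plus. apply exp_le. unfold b. nra.
Qed.

(** The theorem, with kappa = sigma = (1+gamma)/2, Sigma = 1/sigma, and X_N the
    resonant set of the box of side N at level delta_N = exp(-3 N^gamma). *)
Theorem mainTheorem3 :
  forall (gamma rho C : R) (d : nat) (m : R) (p : nat) (fhat : Zd -> Cx),
    0 < gamma < 1 -> 0 < rho -> 0 < C ->
    (1 <= d)%nat -> 0 < m -> (2 <= p)%nat -> real_trig_poly d fhat ->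
  exists (N0 Sig kappa : R),
    1 <= N0 /\ 1 < Sig /\ 0 < kappa < 1 /\
    forall (eps : R) (u : Zd -> Cx) (N : R) (nu : list R),
      0 < eps < 1 ->
      (forall n, length n = d -> Cabs (u n) <= C * exp (- rho * znorm n)) ->
      N0 <= N -> N <= Rpower (Rabs (ln eps)) Sig ->
      length nu = d -> (forall x, In x nu -> 1 <= x <= 2) ->
      exists X : list R -> Prop,
        (forall j, (j < d)%nat -> forall theta, length theta = d ->
           outer_mes_le (section X theta j) (exp (- Rpower N gamma))) /\
        (forall theta, length theta = d -> ~ X theta ->
           forall r, valid_region d r ->
           let pts := region_pts d N r in
           exists G : Zd -> Zd -> Cx,
             is_inverse_on pts (Fent d p fhat m eps nu theta u) G /\
             opnorm_le pts G (exp (Rpower N kappa)) /\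
             (forall n n', In n pts -> In n' pts -> N / 10 <= znorm (zsub n n') ->
                Cabs (G n n') <= exp (- (4 * rho / 5) * znorm (zsub n n')))).
Proof.
  intros gamma rho C d m p fhat Hg Hr HC Hd Hm Hp Hf.
  set (sg := (1 + gamma) / 2).
  destruct (Su_bound d p fhat rho C Hd Hp Hr HC Hf) as [K [HK HSu]].
  destruct (large_N_estimates gamma sg rho K d) as [N0 [HN0 Hest]]; try (unfold sg; lra).
  exists N0, (/ sg), sg. split; [lra|split; [|split; [unfold sg; lra|]]].
  { rewrite <- Rinv_1. apply Rinv_lt_contravar; unfold sg; lra. }
  intros eps u N nu Heps Hu HN HNeps Hnu Hnu2.
  destruct (Hest N HN) as (Fmes & Fsmall & Fnorm & Floss).
  set (dl := exp (- (3 * Rpower N gamma))) in *. set (M := Z.to_nat (up N)).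
  assert (Hdl : 0 < dl) by apply exp_pos.
  assert (Heps_small : eps <= exp (- Rpower N sg)) by (apply eps_le_exp_power; unfold sg in *; lra).
  pose proof (boxZ_card_bound d N ltac:(lra)) as Hcard. fold M in Hcard.
  assert (HQ : 1 <= (2 * N + 3) ^ d) by (apply pow_R1_Rle; lra).
  assert (HP : (2 * N + 3) ^ (2 * d) = ((2 * N + 3) ^ d) ^ 2) by (rewrite <- pow_mult; f_equal; lia).
  exists (resonant_set d M nu m dl). split.
  - intros j Hj th Hth. apply resonant_section_measure; auto. pose proof (sqrt_pos dl). nra.
  - intros th Hth HX r Hreg pts. destruct (region_pts_props d N r) as (Hnd & Hsub & Hlen).
    change (region_pts d N r) with pts in Hnd, Hsub, Hlen. fold M in Hsub, Hlen.
    apply le_INR in Hlen. pose proof (pos_INR (length pts)).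
    assert (HLQ : INR (length pts) <= ((2 * N + 3) ^ d) ^ 2) by nra.
    apply (green_off_resonance d p fhat m eps nu th u rho K N _ _ dl); auto; try lra.
    + intros n Hn. eapply boxZ_len, Hsub, Hn.
    + intros n Hn. apply Rnot_lt_le. intro Hres. apply HX. exists n; auto.
    + rewrite HP in Fsmall. eapply Rle_trans; [|exact Fsmall].
      rewrite Rmult_assoc, (Rmult_comm K).
      apply Rmult_le_compat; try nra.
    + rewrite HP in Fnorm. eapply Rle_trans; [|exact Fnorm]. apply Rmult_le_compat_r.
      * apply Rlt_le, Rdiv_lt_0_compat; lra.
      * apply pow_incr. lra.
Qed.
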